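(* Let $\Omega\subset\mathbb{R}^2$ be a domain (connected open set) and let $u\in C^{2}(\Omega)$. Let $S(u)=\{(x,y)\in\Omega: u_x-y=0,\ u_y+x=0\}$, and on $\Omega\setminus S(u)$ let $D=\sqrt{(u_x-y)^2+(u_y+x)^2}$, $N(u)=(u_x-y,\,u_y+x)/D$ and $H=\operatorname{div}N(u)$ (the Euclidean divergence in the $xy$-plane). Let $p_0\in S(u)$ and suppose there are a constant $C>0$ and a neighborhood of $p_0$ on which $|H(p)|\le C/r(p)$ for all $p\notin S(u)$, where $r(p)=|p-p_0|$. Then either $p_0$ is an isolated point of $S(u)$, or there exists a small neighborhood of $p_0$ whose intersection with $S(u)$ is exactly a $C^{1}$ smooth curve passing through $p_0$. *)

From Stdlib Require Import Reals.
From Coquelicot Require Import Coquelicot.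
Open Scope R_scope.

Definition dist2 (x y x0 y0 : R) : R := sqrt ((x - x0)^2 + (y - y0)^2).

Definition open2 (Om : R -> R -> Prop) : Prop :=
  forall x y, Om x y -> exists e, 0 < e /\
    forall x' y', dist2 x' y' x y < e -> Om x' y'.

Definition connected2 (Om : R -> R -> Prop) : Prop :=
  forall U V : R -> R -> Prop, open2 U -> open2 V ->
    (forall x y, Om x y -> U x y \/ V x y) ->
    (forall x y, Om x y -> U x y -> V x y -> False) ->
    (forall x y, Om x y -> U x y) \/ (forall x y, Om x y -> V x y).

Definition domain2 (Om : R -> R -> Prop) : Prop :=
  open2 Om /\ connected2 Om /\ exists x y, Om x y.

Definition dx (f : R -> R -> R) (x y : R) : R := Derive (fun t => f t y) x.
Definition dy (f : R -> R -> R) (x y : R) : R := Derive (fun t => f x t) y.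

Definition ex_dx (f : R -> R -> R) (x y : R) : Prop := ex_derive (fun t => f t y) x.
Definition ex_dy (f : R -> R -> R) (x y : R) : Prop := ex_derive (fun t => f x t) y.

Definition cont2 (f : R -> R -> R) (x y : R) : Prop :=
  continuous (fun p : R * R => f (fst p) (snd p)) (x, y).

Definition C1_on (Om : R -> R -> Prop) (u : R -> R -> R) : Prop :=
  forall x y, Om x y ->
    ex_dx u x y /\ ex_dy u x y /\
    cont2 u x y /\ cont2 (dx u) x y /\ cont2 (dy u) x y.

Definition C2_on (Om : R -> R -> Prop) (u : R -> R -> R) : Prop :=
  C1_on Om u /\ C1_on Om (dx u) /\ C1_on Om (dy u).

Definition singular (Om : R -> R -> Prop) (u : R -> R -> R) (x y : R) : Prop :=
  Om x y /\ dx u x y - y = 0 /\ dy u x y + x = 0.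

Definition Dnorm (u : R -> R -> R) (x y : R) : R :=
  sqrt ((dx u x y - y)^2 + (dy u x y + x)^2).

Definition N1 (u : R -> R -> R) (x y : R) : R := (dx u x y - y) / Dnorm u x y.
Definition N2 (u : R -> R -> R) (x y : R) : R := (dy u x y + x) / Dnorm u x y.

Definition Hcurv (u : R -> R -> R) (x y : R) : R :=
  dx (N1 u) x y + dy (N2 u) x y.

Definition isolated_in (S : R -> R -> Prop) (x0 y0 : R) : Prop :=
  exists d, 0 < d /\ forall x y, dist2 x y x0 y0 < d -> S x y -> x = x0 /\ y = y0.

Definition C1_curve_through (g1 g2 : R -> R) (e x0 y0 : R) : Prop :=
  0 < e /\
  (forall t, -e < t < e ->
     ex_derive g1 t /\ ex_derive g2 t /\
     continuous (Derive g1) t /\ continuous (Derive g2) t /\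
     (Derive g1 t <> 0 \/ Derive g2 t <> 0)) /\
  (forall s t, -e < s < e -> -e < t < e -> g1 s = g1 t -> g2 s = g2 t -> s = t) /\
  g1 0 = x0 /\ g2 0 = y0.

(* Write F = (u_x - y, u_y + x), so that S(u) is the zero set of F and N(u) = F / |F|.
   By Schwarz the Jacobian M of F at p0 satisfies M21 - M12 = 2, so M <> 0.  If det M <> 0,
   p0 is an isolated zero of F.  Otherwise M has rank one: for some
   n <> 0 the combination W = -n2 F1 + n1 F2 is flat at p0 while G = n1 F1 + n2 F2 has a
   nonvanishing gradient.  Since H = Q(D^2 u, F) / |F|^3 for a quadratic form Q which is
   nonzero in some direction V, the bound |H| <= C / r forces r = O(|F|) wherever F points
   almost along V.  If a zero of G near p0 had W <> 0, a small shift along the gradient of G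
   would produce such a point with |F| = o(r); hence near p0 the set S(u) is the zero set of
   G, a C^1 curve by the implicit function theorem. *)

From Stdlib Require Import Reals Lra Psatz ClassicalEpsilon.
From Coquelicot Require Import Coquelicot.
Open Scope R_scope.

Lemma Rabs_le_dist2_l x y a b : Rabs (x - a) <= dist2 x y a b.
Proof.
  unfold dist2; rewrite <- sqrt_Rsqr_abs; apply sqrt_le_1_alt; unfold Rsqr.
  assert (0 <= (y - b) ^ 2) by apply pow2_ge_0; nra.
Qed.

Lemma Rabs_le_dist2_r x y a b : Rabs (y - b) <= dist2 x y a b.
Proof.
  unfold dist2; rewrite <- sqrt_Rsqr_abs; apply sqrt_le_1_alt; unfold Rsqr.
  assert (0 <= (x - a) ^ 2) by apply pow2_ge_0; nra.
Qed.

Lemma dist2_le_Rabs_sum x y a b : dist2 x y a b <= Rabs (x - a) + Rabs (y - b).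
Proof.
  unfold dist2.
  assert (0 <= Rabs (x - a)) by apply Rabs_pos; assert (0 <= Rabs (y - b)) by apply Rabs_pos.
  rewrite <- (sqrt_Rsqr (Rabs (x - a) + Rabs (y - b))) by lra.
  apply sqrt_le_1_alt; unfold Rsqr.
  rewrite <- (pow2_abs (x - a)), <- (pow2_abs (y - b)); nra.
Qed.

Lemma Rabs_sum_le_dist2 x y a b : Rabs (x - a) + Rabs (y - b) <= 2 * dist2 x y a b.
Proof. assert (H1 := Rabs_le_dist2_l x y a b); assert (H2 := Rabs_le_dist2_r x y a b); lra. Qed.

Lemma sqrt_sum_sq_le u v : sqrt (u ^ 2 + v ^ 2) <= Rabs u + Rabs v.
Proof. assert (T := dist2_le_Rabs_sum u v 0 0); unfold dist2 in T; rewrite !Rminus_0_r in T; exact T. Qed.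

Lemma dist2_lt_iff x y a b d : 0 < d ->
  (dist2 x y a b < d <-> (x - a) ^ 2 + (y - b) ^ 2 < d ^ 2).
Proof.
  intros Hd; unfold dist2.
  assert (E : sqrt (d ^ 2) = d) by (apply sqrt_pow2; lra).
  assert (0 <= (x - a) ^ 2) by apply pow2_ge_0; assert (0 <= (y - b) ^ 2) by apply pow2_ge_0.
  split; intros Hq.
  - apply sqrt_lt_0_alt; rewrite E; exact Hq.
  - rewrite <- E; apply sqrt_lt_1_alt; lra.
Qed.

Lemma Rabs_lin2 p q u v : Rabs (p * u + q * v) <= Rabs p * Rabs u + Rabs q * Rabs v.
Proof. eapply Rle_trans; [apply Rabs_triang|]; rewrite !Rabs_mult; lra. Qed.

Lemma Rabs_lin2_le p q u v B : Rabs u <= B -> Rabs v <= B ->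
  Rabs (p * u + q * v) <= (Rabs p + Rabs q) * B.
Proof.
  intros Hu Hv; eapply Rle_trans; [apply Rabs_lin2|].
  assert (0 <= Rabs p) by apply Rabs_pos; assert (0 <= Rabs q) by apply Rabs_pos; nra.
Qed.

Lemma sum_sq_pos a b : ~ (a = 0 /\ b = 0) -> 0 < a ^ 2 + b ^ 2.
Proof.
  intros H; destruct (Req_dec a 0) as [->|Ha].
  - destruct (Req_dec b 0) as [->|Hb]; [tauto|].
    assert (0 < b ^ 2) by (simpl; nra); simpl; lra.
  - assert (0 < a ^ 2) by (simpl; nra); assert (0 <= b ^ 2) by apply pow2_ge_0; lra.
Qed.

Lemma sum_abs_pos a b : 0 < a ^ 2 + b ^ 2 -> 0 < Rabs a + Rabs b.
Proof.
  intros H; destruct (Req_dec a 0) as [->|Ha].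
  - destruct (Req_dec b 0) as [->|Hb]; [simpl in H; lra|].
    assert (0 < Rabs b) by (apply Rabs_pos_lt; auto); rewrite Rabs_R0; lra.
  - assert (0 < Rabs a) by (apply Rabs_pos_lt; auto); assert (0 <= Rabs b) by apply Rabs_pos; lra.
Qed.

Lemma cont2_box f x y : cont2 f x y -> forall eps, 0 < eps -> exists del, 0 < del /\
  forall x' y', Rabs (x' - x) < del -> Rabs (y' - y) < del -> Rabs (f x' y' - f x y) < eps.
Proof.
  intros H eps Heps.
  destruct (proj2 (continuity_2d_pt_filterlim f x y) H (mkposreal eps Heps)) as [d Hd].
  exists d; split; [apply cond_pos | intros; apply Hd; auto].
Qed.

Lemma cont2_ext f g x y : (forall x y, f x y = g x y) -> cont2 f x y -> cont2 g x y.
Proof.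
  unfold cont2; intros E; apply continuous_ext; intros p; apply E.
Qed.

Lemma cont2_plus f g x y : cont2 f x y -> cont2 g x y -> cont2 (fun x y => f x y + g x y) x y.
Proof.
  unfold cont2; intros Hf Hg.
  apply (continuous_plus (fun p => f (fst p) (snd p)) (fun p => g (fst p) (snd p))); assumption.
Qed.

Lemma cont2_affine f g al be c x y : cont2 f x y -> cont2 g x y ->
  cont2 (fun x y => al * f x y + be * g x y + c) x y.
Proof.
  unfold cont2; intros Hf Hg.
  apply (continuous_plus (fun p => al * f (fst p) (snd p) + be * g (fst p) (snd p)) (fun _ => c));
    [|apply continuous_const].
  apply (continuous_plus (fun p => al * f (fst p) (snd p)) (fun p => be * g (fst p) (snd p)));
    [apply (continuous_scal_r al (fun p => f (fst p) (snd p))) | apply (continuous_scal_r be (fun p => g (fst p) (snd p)))];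
    assumption.
Qed.

Lemma continuity_pt_epsilon (f : R -> R) x :
  (forall eps, 0 < eps -> exists del, 0 < del /\
     forall y, Rabs (y - x) < del -> Rabs (f y - f x) < eps) ->
  continuity_pt f x.
Proof.
  intros H; apply continuity_pt_locally; intros eps.
  destruct (H eps (cond_pos eps)) as [d [Hd Hf]].
  exists (mkposreal d Hd); intros y Hy; apply Hf, Hy.
Qed.

(** * Strict differentiability *)

Definition is_strict_derive2 (f : R -> R -> R) (a b fx fy : R) : Prop :=
  forall eps, 0 < eps -> exists del, 0 < del /\
    forall x1 y1 x2 y2, Rabs (x1 - a) < del -> Rabs (y1 - b) < del ->
      Rabs (x2 - a) < del -> Rabs (y2 - b) < del ->
      Rabs (f x1 y1 - f x2 y2 - (fx * (x1 - x2) + fy * (y1 - y2)))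
        <= eps * (Rabs (x1 - x2) + Rabs (y1 - y2)).

Lemma MVT_interval (g dg : R -> R) (a b c del : R) :
  Rabs (a - c) < del -> Rabs (b - c) < del ->
  (forall t, Rabs (t - c) < del -> is_derive g t (dg t)) ->
  exists t, Rabs (t - c) < del /\ g b - g a = dg t * (b - a).
Proof.
  intros Ha Hb Hd.
  assert (Hin : forall t, Rmin a b <= t <= Rmax a b -> Rabs (t - c) < del).
  { intros t Ht; apply Rabs_def2 in Ha; apply Rabs_def2 in Hb; apply Rabs_def1;
      unfold Rmin, Rmax in Ht; destruct (Rle_dec a b); lra. }
  destruct (MVT_gen g a b dg) as [t [Ht Heq]].
  - intros t Ht; apply Hd, Hin; lra.
  - intros t Ht; apply continuity_pt_filterlim, (ex_derive_continuous g).
    exists (dg t); apply Hd, Hin; lra.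
  - exists t; auto.
Qed.

(* Continuity of the partial derivatives at (a, b) alone suffices, by the mean value
   theorem applied along the two sides of a rectangle. *)
Lemma is_strict_derive2_C1 f a b rho : 0 < rho ->
  (forall x y, Rabs (x - a) < rho -> Rabs (y - b) < rho -> ex_dx f x y /\ ex_dy f x y) ->
  cont2 (dx f) a b -> cont2 (dy f) a b -> is_strict_derive2 f a b (dx f a b) (dy f a b).
Proof.
  intros Hr Hex Hcx Hcy eps Heps.
  destruct (cont2_box _ _ _ Hcx eps Heps) as [d1 [Hd1 H1]].
  destruct (cont2_box _ _ _ Hcy eps Heps) as [d2 [Hd2 H2]].
  assert (Hm1 := Rmin_l rho (Rmin d1 d2)); assert (Hm2 := Rmin_r rho (Rmin d1 d2)).
  assert (Hm3 := Rmin_l d1 d2); assert (Hm4 := Rmin_r d1 d2).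
  exists (Rmin rho (Rmin d1 d2)); split; [repeat apply Rmin_glb_lt; auto|].
  set (del := Rmin rho (Rmin d1 d2)) in *.
  intros x1 y1 x2 y2 Hx1 Hy1 Hx2 Hy2.
  destruct (MVT_interval (fun t => f t y1) (fun t => dx f t y1) x2 x1 a del)
    as [c [Hc Ec]]; auto.
  { intros t Ht; apply Derive_correct; apply (Hex t y1); lra. }
  destruct (MVT_interval (fun t => f x2 t) (fun t => dy f x2 t) y2 y1 b del)
    as [c' [Hc' Ec']]; auto.
  { intros t Ht; apply Derive_correct; apply (Hex x2 t); lra. }
  replace (f x1 y1 - f x2 y2 - (dx f a b * (x1 - x2) + dy f a b * (y1 - y2)))
    with ((dx f c y1 - dx f a b) * (x1 - x2) + (dy f x2 c' - dy f a b) * (y1 - y2))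
    by (simpl in Ec, Ec'; lra).
  assert (B1 : Rabs (dx f c y1 - dx f a b) < eps) by (apply H1; lra).
  assert (B2 : Rabs (dy f x2 c' - dy f a b) < eps) by (apply H2; lra).
  eapply Rle_trans; [apply Rabs_lin2|].
  assert (0 <= Rabs (x1 - x2)) by apply Rabs_pos; assert (0 <= Rabs (y1 - y2)) by apply Rabs_pos.
  nra.
Qed.

Lemma is_strict_derive2_ext f g a b fx fy :
  (forall x y, f x y = g x y) -> is_strict_derive2 f a b fx fy -> is_strict_derive2 g a b fx fy.
Proof.
  intros E H eps He; destruct (H eps He) as [d [Hd Hh]].
  exists d; split; auto; intros; rewrite <- !E; auto.
Qed.

Lemma is_strict_derive2_lin2 f g a b fx fy gx gy al be :
  is_strict_derive2 f a b fx fy -> is_strict_derive2 g a b gx gy ->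
  is_strict_derive2 (fun x y => al * f x y + be * g x y) a b
    (al * fx + be * gx) (al * fy + be * gy).
Proof.
  intros Hf Hg eps Heps.
  set (K := Rabs al + Rabs be + 1).
  assert (HK : 0 < K) by (unfold K; assert (0 <= Rabs al) by apply Rabs_pos;
    assert (0 <= Rabs be) by apply Rabs_pos; lra).
  destruct (Hf (eps / K)) as [d1 [Hd1 H1]]; [apply Rdiv_lt_0_compat; auto|].
  destruct (Hg (eps / K)) as [d2 [Hd2 H2]]; [apply Rdiv_lt_0_compat; auto|].
  assert (Hm1 := Rmin_l d1 d2); assert (Hm2 := Rmin_r d1 d2).
  exists (Rmin d1 d2); split; [apply Rmin_glb_lt; auto|].
  intros x1 y1 x2 y2 Hx1 Hy1 Hx2 Hy2.
  assert (B1 := H1 x1 y1 x2 y2 ltac:(lra) ltac:(lra) ltac:(lra) ltac:(lra)).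
  assert (B2 := H2 x1 y1 x2 y2 ltac:(lra) ltac:(lra) ltac:(lra) ltac:(lra)).
  set (S := Rabs (x1 - x2) + Rabs (y1 - y2)) in *.
  replace (al * f x1 y1 + be * g x1 y1 - (al * f x2 y2 + be * g x2 y2)
      - ((al * fx + be * gx) * (x1 - x2) + (al * fy + be * gy) * (y1 - y2)))
    with (al * (f x1 y1 - f x2 y2 - (fx * (x1 - x2) + fy * (y1 - y2)))
        + be * (g x1 y1 - g x2 y2 - (gx * (x1 - x2) + gy * (y1 - y2)))) by ring.
  eapply Rle_trans; [apply (Rabs_lin2_le _ _ _ _ (eps / K * S)); assumption|].
  assert (0 <= S) by (unfold S; assert (0 <= Rabs (x1 - x2)) by apply Rabs_pos;
    assert (0 <= Rabs (y1 - y2)) by apply Rabs_pos; lra).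
  assert (0 <= eps / K * S) by (apply Rmult_le_pos; [apply Rlt_le, Rdiv_lt_0_compat|]; lra).
  apply Rle_trans with (K * (eps / K * S)); [apply Rmult_le_compat_r; [assumption | unfold K; lra]|].
  right; field; lra.
Qed.

Lemma is_strict_derive2_add_lin f a b fx fy ga de :
  is_strict_derive2 f a b fx fy ->
  is_strict_derive2 (fun x y => f x y + ga * x + de * y) a b (fx + ga) (fy + de).
Proof.
  intros Hf eps Heps; destruct (Hf eps Heps) as [d [Hd H]].
  exists d; split; auto; intros x1 y1 x2 y2 Hx1 Hy1 Hx2 Hy2.
  replace (f x1 y1 + ga * x1 + de * y1 - (f x2 y2 + ga * x2 + de * y2)
      - ((fx + ga) * (x1 - x2) + (fy + de) * (y1 - y2)))
    with (f x1 y1 - f x2 y2 - (fx * (x1 - x2) + fy * (y1 - y2))) by ring.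
  auto.
Qed.

Lemma Rabs_det_le m11 m12 m21 m22 X Y :
  Rabs (m11 * m22 - m12 * m21) * (Rabs X + Rabs Y)
    <= (Rabs m11 + Rabs m12 + Rabs m21 + Rabs m22)
       * (Rabs (m11 * X + m12 * Y) + Rabs (m21 * X + m22 * Y)).
Proof.
  set (e1 := m11 * X + m12 * Y); set (e2 := m21 * X + m22 * Y).
  assert (EX : (m11 * m22 - m12 * m21) * X = m22 * e1 + (- m12) * e2) by (unfold e1, e2; ring).
  assert (EY : (m11 * m22 - m12 * m21) * Y = (- m21) * e1 + m11 * e2) by (unfold e1, e2; ring).
  assert (CX := Rabs_lin2 m22 (- m12) e1 e2); rewrite <- EX, Rabs_mult, Rabs_Ropp in CX.
  assert (CY := Rabs_lin2 (- m21) m11 e1 e2); rewrite <- EY, Rabs_mult, Rabs_Ropp in CY.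
  assert (0 <= Rabs m11) by apply Rabs_pos; assert (0 <= Rabs m12) by apply Rabs_pos.
  assert (0 <= Rabs m21) by apply Rabs_pos; assert (0 <= Rabs m22) by apply Rabs_pos.
  assert (0 <= Rabs e1) by apply Rabs_pos; assert (0 <= Rabs e2) by apply Rabs_pos.
  nra.
Qed.

Lemma is_strict_derive2_zero_isolated f1 f2 a b m11 m12 m21 m22 :
  is_strict_derive2 f1 a b m11 m12 -> is_strict_derive2 f2 a b m21 m22 ->
  f1 a b = 0 -> f2 a b = 0 -> m11 * m22 - m12 * m21 <> 0 ->
  exists d, 0 < d /\ forall x y, Rabs (x - a) < d -> Rabs (y - b) < d ->
    f1 x y = 0 -> f2 x y = 0 -> x = a /\ y = b.
Proof.
  intros S1 S2 E1 E2 Hdet.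
  set (K := Rabs m11 + Rabs m12 + Rabs m21 + Rabs m22).
  set (dt := Rabs (m11 * m22 - m12 * m21)).
  assert (Hdt : 0 < dt) by (apply Rabs_pos_lt; auto).
  assert (HK : 0 < K).
  { unfold K; assert (0 <= Rabs m11) by apply Rabs_pos; assert (0 <= Rabs m12) by apply Rabs_pos;
    assert (0 <= Rabs m21) by apply Rabs_pos; assert (0 <= Rabs m22) by apply Rabs_pos.
    destruct (Req_dec m11 0) as [Z|Z]; [|assert (0 < Rabs m11) by (apply Rabs_pos_lt; auto); lra].
    destruct (Req_dec m12 0) as [Z'|Z']; [|assert (0 < Rabs m12) by (apply Rabs_pos_lt; auto); lra].
    exfalso; apply Hdet; rewrite Z, Z'; ring. }
  assert (He : 0 < dt / (4 * K)) by (apply Rdiv_lt_0_compat; lra).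
  destruct (S1 _ He) as [d1 [Hd1 G1]]; destruct (S2 _ He) as [d2 [Hd2 G2]].
  assert (Hm1 := Rmin_l d1 d2); assert (Hm2 := Rmin_r d1 d2).
  exists (Rmin d1 d2); split; [apply Rmin_glb_lt; auto|].
  intros x y Hx Hy Z1 Z2.
  assert (B1 := G1 x y a b ltac:(lra) ltac:(lra) ltac:(rewrite Rminus_diag, Rabs_R0; lra)
    ltac:(rewrite Rminus_diag, Rabs_R0; lra)).
  assert (B2 := G2 x y a b ltac:(lra) ltac:(lra) ltac:(rewrite Rminus_diag, Rabs_R0; lra)
    ltac:(rewrite Rminus_diag, Rabs_R0; lra)).
  rewrite Z1, E1, Rminus_diag, Rminus_0_l, Rabs_Ropp in B1.
  rewrite Z2, E2, Rminus_diag, Rminus_0_l, Rabs_Ropp in B2.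
  assert (D := Rabs_det_le m11 m12 m21 m22 (x - a) (y - b)); fold K dt in D.
  assert (0 <= Rabs (x - a)) by apply Rabs_pos; assert (0 <= Rabs (y - b)) by apply Rabs_pos.
  assert (HS : Rabs (x - a) + Rabs (y - b) = 0).
  { assert (Hq : K * (dt / (4 * K)) = dt / 4) by (field; lra). nra. }
  assert (Rabs (x - a) = 0) by lra; assert (Rabs (y - b) = 0) by lra.
  split; apply Rminus_diag_uniq, Rabs_eq_0; assumption.
Qed.

(** * The field N(u) and its divergence *)

Definition N1num (u : R -> R -> R) (x y : R) : R := dx u x y - y.
Definition N2num (u : R -> R -> R) (x y : R) : R := dy u x y + x.

Definition curv_form (c1 c2 c3 A B : R) : R := c1 * B ^ 2 + c2 * A ^ 2 - A * B * c3.

Lemma open2_box Om a b : open2 Om -> Om a b -> exists rho, 0 < rho /\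
  forall x y, Rabs (x - a) < rho -> Rabs (y - b) < rho -> Om x y.
Proof.
  intros HO Hab; destruct (HO a b Hab) as [e [He H]].
  exists (e / 2); split; [lra|]; intros x y Hx Hy; apply H.
  assert (L := dist2_le_Rabs_sum x y a b); lra.
Qed.

Lemma is_strict_derive2_C1_on Om f a b : open2 Om -> C1_on Om f -> Om a b ->
  is_strict_derive2 f a b (dx f a b) (dy f a b).
Proof.
  intros HO Hf Hab; destruct (open2_box Om a b HO Hab) as [rho [Hr Hbox]].
  apply (is_strict_derive2_C1 _ _ _ rho Hr); try apply (Hf a b Hab).
  intros x y Hx Hy; destruct (Hf x y (Hbox x y Hx Hy)) as [? [? _]]; auto.
Qed.

Lemma is_strict_derive2_N1num Om u a b : open2 Om -> C2_on Om u -> Om a b ->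
  is_strict_derive2 (N1num u) a b (dx (dx u) a b) (dy (dx u) a b - 1).
Proof.
  intros HO [_ [Hdx _]] Hab.
  rewrite <- (Rplus_0_r (dx (dx u) a b)); unfold Rminus.
  apply (is_strict_derive2_ext (fun x y => dx u x y + 0 * x + -1 * y));
    [intros; unfold N1num; ring|].
  apply is_strict_derive2_add_lin, (is_strict_derive2_C1_on Om); assumption.
Qed.

Lemma is_strict_derive2_N2num Om u a b : open2 Om -> C2_on Om u -> Om a b ->
  is_strict_derive2 (N2num u) a b (dx (dy u) a b + 1) (dy (dy u) a b).
Proof.
  intros HO [_ [_ Hdy]] Hab.
  rewrite <- (Rplus_0_r (dy (dy u) a b)).
  apply (is_strict_derive2_ext (fun x y => dy u x y + 1 * x + 0 * y));
    [intros; unfold N2num; ring|].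
  apply is_strict_derive2_add_lin, (is_strict_derive2_C1_on Om); assumption.
Qed.

Lemma dx_dy_comm Om u a b : open2 Om -> C2_on Om u -> Om a b ->
  dx (dy u) a b = dy (dx u) a b.
Proof.
  intros HO [Hu [Hdx Hdy]] Hab; destruct (open2_box Om a b HO Hab) as [rho [Hr Hbox]].
  apply Schwarz.
  - exists (mkposreal rho Hr); intros x y Hx Hy; assert (Oxy := Hbox x y Hx Hy).
    destruct (Hu x y Oxy) as [? [? _]]; destruct (Hdx x y Oxy) as [? [? _]].
    destruct (Hdy x y Oxy) as [? [? _]]; repeat split; auto.
  - apply continuity_2d_pt_filterlim, (Hdy a b Hab).
  - apply continuity_2d_pt_filterlim, (Hdx a b Hab).
Qed.

Lemma is_derive_normalize (P Q : R -> R) x dP dQ :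
  is_derive P x dP -> is_derive Q x dQ -> 0 < P x ^ 2 + Q x ^ 2 ->
  is_derive (fun t => P t / sqrt (P t ^ 2 + Q t ^ 2)) x
    ((dP * Q x ^ 2 - P x * Q x * dQ) / sqrt (P x ^ 2 + Q x ^ 2) ^ 3).
Proof.
  intros HP HQ Hpos.
  assert (HD : sqrt (P x ^ 2 + Q x ^ 2) * sqrt (P x ^ 2 + Q x ^ 2) = P x ^ 2 + Q x ^ 2)
    by (apply sqrt_sqrt; lra).
  assert (HD0 : 0 < sqrt (P x ^ 2 + Q x ^ 2)) by (apply sqrt_lt_R0; lra).
  auto_derive.
  - repeat split; try (eexists; eassumption); simpl in *; lra.
  - change (fun t => P t) with P; change (fun t => Q t) with Q.
    rewrite (is_derive_unique _ _ _ HP), (is_derive_unique _ _ _ HQ).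
    replace (P x * (P x * 1) + Q x * (Q x * 1)) with (P x ^ 2 + Q x ^ 2) by ring.
    set (D := sqrt (P x ^ 2 + Q x ^ 2)) in *.
    replace (dP * Q x ^ 2) with (dP * (D * D - P x ^ 2)) by (rewrite HD; ring).
    field; lra.
Qed.

Lemma Hcurv_eq (u : R -> R -> R) x y :
  ex_dx (dx u) x y -> ex_dy (dx u) x y -> ex_dx (dy u) x y -> ex_dy (dy u) x y ->
  0 < Dnorm u x y ->
  Hcurv u x y = curv_form (dx (dx u) x y) (dy (dy u) x y) (dy (dx u) x y + dx (dy u) x y)
    (N1num u x y) (N2num u x y) / Dnorm u x y ^ 3.
Proof.
  unfold ex_dx, ex_dy, N1num, N2num; intros Hxx Hxy Hyx Hyy HD.
  assert (HD2 : 0 < (dx u x y - y) ^ 2 + (dy u x y + x) ^ 2).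
  { apply sqrt_lt_0_alt; rewrite sqrt_0; exact HD. }
  assert (E1 : dx (N1 u) x y = (dx (dx u) x y * (dy u x y + x) ^ 2
      - (dx u x y - y) * (dy u x y + x) * (dx (dy u) x y + 1)) / Dnorm u x y ^ 3).
  { apply is_derive_unique, (is_derive_normalize (fun t => dx u t y - y) (fun t => dy u t y + t));
      [auto_derive; [exact Hxx | unfold dx; ring] | auto_derive; [exact Hyx | unfold dx; ring]
      | exact HD2]. }
  assert (E2 : dy (N2 u) x y = (dy (dy u) x y * (dx u x y - y) ^ 2
      - (dy u x y + x) * (dx u x y - y) * (dy (dx u) x y - 1)) / Dnorm u x y ^ 3).
  { unfold Dnorm; replace ((dx u x y - y) ^ 2 + (dy u x y + x) ^ 2)
      with ((dy u x y + x) ^ 2 + (dx u x y - y) ^ 2) by ring.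
    apply is_derive_unique; unfold N2, Dnorm.
    apply (is_derive_ext (fun t => (dy u x t + x) / sqrt ((dy u x t + x) ^ 2 + (dx u x t - t) ^ 2)));
      [intros t; rewrite (Rplus_comm ((dy u x t + x) ^ 2)); reflexivity|].
    apply (is_derive_normalize (fun t => dy u x t + x) (fun t => dx u x t - t));
      [auto_derive; [exact Hyy | unfold dy; ring] | auto_derive; [exact Hxy | unfold dy; ring]
      | lra]. }
  unfold Hcurv, curv_form; rewrite E1, E2; field; lra.
Qed.

(* When [dist2] vanishes the hypothesis degenerates ([C / 0 = 0] in Rocq), but so does the
   conclusion. *)
Lemma curv_form_dist2_le Om u x y x0 y0 C : C2_on Om u -> Om x y -> 0 < C ->
  ~ (N1num u x y = 0 /\ N2num u x y = 0) ->
  Rabs (Hcurv u x y) <= C / dist2 x y x0 y0 ->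
  Rabs (curv_form (dx (dx u) x y) (dy (dy u) x y) (dy (dx u) x y + dx (dy u) x y)
          (N1num u x y) (N2num u x y)) * dist2 x y x0 y0
    <= C * sqrt (N1num u x y ^ 2 + N2num u x y ^ 2) ^ 3.
Proof.
  intros [_ [Hdx Hdy]] Oxy HC Hnz Hb.
  destruct (Hdx x y Oxy) as [? [? _]]; destruct (Hdy x y Oxy) as [? [? _]].
  assert (HD : 0 < Dnorm u x y) by (apply sqrt_lt_R0, sum_sq_pos, Hnz).
  assert (HD3 : 0 < Dnorm u x y ^ 3) by (apply pow_lt; lra).
  change (sqrt (N1num u x y ^ 2 + N2num u x y ^ 2)) with (Dnorm u x y).
  rewrite Hcurv_eq in Hb by assumption.
  assert (Hr := sqrt_pos ((x - x0) ^ 2 + (y - y0) ^ 2)); fold (dist2 x y x0 y0) in Hr.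
  destruct (Req_dec (dist2 x y x0 y0) 0) as [Z|Z].
  - rewrite Z, Rmult_0_r; apply Rmult_le_pos; lra.
  - unfold Rdiv in Hb; rewrite Rabs_mult, Rabs_inv, (Rabs_right (Dnorm u x y ^ 3)) in Hb by lra.
    apply Rmult_le_compat_r with (r := Dnorm u x y ^ 3 * dist2 x y x0 y0) in Hb;
      [|apply Rmult_le_pos; lra].
    replace (C * / dist2 x y x0 y0 * (Dnorm u x y ^ 3 * dist2 x y x0 y0))
      with (C * Dnorm u x y ^ 3) in Hb by (field; lra).
    eapply Rle_trans; [|exact Hb]; right; field; lra.
Qed.

(** * Directions in which the curvature bound controls the distance *)

Lemma Rabs_prod3_sub x y z x0 y0 z0 eta : 0 <= eta <= 1 ->
  Rabs (x - x0) <= eta -> Rabs (y - y0) <= eta -> Rabs (z - z0) <= eta ->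
  Rabs (x * y * z - x0 * y0 * z0) <= 3 * eta * ((Rabs x0 + 1) * (Rabs y0 + 1) * (Rabs z0 + 1)).
Proof.
  intros He Hx Hy Hz.
  assert (Ay : Rabs y <= Rabs y0 + 1) by (assert (T := Rabs_triang_inv y y0); lra).
  assert (Az : Rabs z <= Rabs z0 + 1) by (assert (T := Rabs_triang_inv z z0); lra).
  assert (P1 : 0 <= Rabs x0) by apply Rabs_pos; assert (P2 : 0 <= Rabs y0) by apply Rabs_pos.
  assert (P3 : 0 <= Rabs z0) by apply Rabs_pos; assert (P4 : 0 <= Rabs y) by apply Rabs_pos.
  assert (P5 : 0 <= Rabs z) by apply Rabs_pos; assert (P6 : 0 <= Rabs (x - x0)) by apply Rabs_pos.
  assert (P7 : 0 <= Rabs (y - y0)) by apply Rabs_pos; assert (P8 : 0 <= Rabs (z - z0)) by apply Rabs_pos.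
  replace (x * y * z - x0 * y0 * z0)
    with ((x - x0) * y * z + x0 * (y - y0) * z + x0 * y0 * (z - z0)) by ring.
  eapply Rle_trans; [apply Rabs_triang|].
  eapply Rle_trans; [apply Rplus_le_compat_r, Rabs_triang|]; rewrite !Rabs_mult.
  assert (Q1 : Rabs (x - x0) * Rabs y * Rabs z <= eta * ((Rabs y0 + 1) * (Rabs z0 + 1)))
    by (rewrite Rmult_assoc; apply Rmult_le_compat; try apply Rmult_le_compat; nra).
  assert (Q2 : Rabs x0 * Rabs (y - y0) * Rabs z <= Rabs x0 * (eta * (Rabs z0 + 1)))
    by (rewrite Rmult_assoc; apply Rmult_le_compat_l; [lra|]; apply Rmult_le_compat; lra).
  assert (Q3 : Rabs x0 * Rabs y0 * Rabs (z - z0) <= Rabs x0 * Rabs y0 * eta)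
    by (apply Rmult_le_compat_l; [nra | lra]).
  set (P := (Rabs x0 + 1) * (Rabs y0 + 1) * (Rabs z0 + 1)).
  assert (R1 : eta * ((Rabs y0 + 1) * (Rabs z0 + 1)) <= eta * P).
  { apply Rmult_le_compat_l; [lra|]; unfold P; rewrite Rmult_assoc.
    rewrite <- (Rmult_1_l ((Rabs y0 + 1) * (Rabs z0 + 1))) at 1.
    apply Rmult_le_compat_r; nra. }
  assert (R2 : Rabs x0 * (eta * (Rabs z0 + 1)) <= eta * P).
  { replace (eta * P) with ((Rabs x0 + 1) * (Rabs y0 + 1) * (eta * (Rabs z0 + 1)))
      by (unfold P; ring).
    apply Rmult_le_compat_r; nra. }
  assert (R3 : Rabs x0 * Rabs y0 * eta <= eta * P).
  { rewrite Rmult_comm; apply Rmult_le_compat_l; [lra|]; unfold P.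
    assert (Rabs x0 * Rabs y0 <= (Rabs x0 + 1) * (Rabs y0 + 1)) by nra.
    assert (0 <= (Rabs x0 + 1) * (Rabs y0 + 1)) by nra; nra. }
  lra.
Qed.

Lemma curv_form_bounded_below c10 c20 c30 V1 V2 :
  curv_form c10 c20 c30 V1 V2 <> 0 -> exists eta, 0 < eta /\ eta <= 1 /\
  forall c1 c2 c3 A B,
    Rabs (c1 - c10) <= eta -> Rabs (c2 - c20) <= eta -> Rabs (c3 - c30) <= eta ->
    Rabs (A - V1) <= eta -> Rabs (B - V2) <= eta ->
    Rabs (curv_form c10 c20 c30 V1 V2) / 2 <= Rabs (curv_form c1 c2 c3 A B).
Proof.
  intros HQ0; set (q0 := Rabs (curv_form c10 c20 c30 V1 V2)).
  assert (Hq0 : 0 < q0) by (apply Rabs_pos_lt, HQ0).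
  set (K := 3 * ((Rabs c10 + 1) * (Rabs V2 + 1) * (Rabs V2 + 1)
    + (Rabs c20 + 1) * (Rabs V1 + 1) * (Rabs V1 + 1)
    + (Rabs V1 + 1) * (Rabs V2 + 1) * (Rabs c30 + 1))).
  assert (HK : 0 < K).
  { assert (P : forall r, 0 < Rabs r + 1) by (intros r; assert (T := Rabs_pos r); lra).
    unfold K; apply Rmult_lt_0_compat; [lra|].
    repeat apply Rplus_lt_0_compat; repeat apply Rmult_lt_0_compat; apply P. }
  assert (Hm1 := Rmin_l 1 (q0 / (2 * K))); assert (Hm2 := Rmin_r 1 (q0 / (2 * K))).
  exists (Rmin 1 (q0 / (2 * K))).
  split; [apply Rmin_glb_lt; [lra | apply Rdiv_lt_0_compat; lra]|]; split; [exact Hm1|].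
  set (eta := Rmin 1 (q0 / (2 * K))) in *; intros c1 c2 c3 A B H1 H2 H3 HA HB.
  assert (He : 0 <= eta <= 1) by (split; [eapply Rle_trans; [apply Rabs_pos | exact H1] | lra]).
  assert (T1 := Rabs_prod3_sub c1 B B c10 V2 V2 eta He H1 HB HB).
  assert (T2 := Rabs_prod3_sub c2 A A c20 V1 V1 eta He H2 HA HA).
  assert (T3 := Rabs_prod3_sub A B c3 V1 V2 c30 eta He HA HB H3).
  assert (Hdiff : Rabs (curv_form c10 c20 c30 V1 V2 - curv_form c1 c2 c3 A B) <= eta * K).
  { rewrite Rabs_minus_sym; unfold curv_form.
    replace (c1 * B ^ 2 + c2 * A ^ 2 - A * B * c3 - (c10 * V2 ^ 2 + c20 * V1 ^ 2 - V1 * V2 * c30))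
      with ((c1 * B * B - c10 * V2 * V2) + (c2 * A * A - c20 * V1 * V1)
            - (A * B * c3 - V1 * V2 * c30)) by ring.
    unfold Rminus at 1; eapply Rle_trans; [apply Rabs_triang|]; rewrite Rabs_Ropp.
    eapply Rle_trans; [apply Rplus_le_compat_r, Rabs_triang|]; unfold K; lra. }
  assert (eta * K <= q0 / 2).
  { apply Rle_trans with (q0 / (2 * K) * K); [apply Rmult_le_compat_r; lra | right; field; lra]. }
  assert (T := Rabs_triang_inv (curv_form c10 c20 c30 V1 V2) (curv_form c1 c2 c3 A B)).
  fold q0 in T; lra.
Qed.

Definition direction_controls_dist (f1 f2 : R -> R -> R) (a b V1 V2 : R) : Prop :=
  exists eta K del, 0 < eta /\ 0 < del /\
    forall x y phi, Rabs (x - a) < del -> Rabs (y - b) < del -> phi <> 0 ->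
      Rabs (f1 x y - phi * V1) <= eta * Rabs phi -> Rabs (f2 x y - phi * V2) <= eta * Rabs phi ->
      dist2 x y a b <= K * Rabs phi.

Lemma dist_le_of_scaled_bound phi Qp q0 T S r C : 0 < q0 -> q0 / 2 <= Rabs Qp ->
  0 < S <= Rabs phi * T -> 0 <= r -> Rabs (phi ^ 2 * Qp) * r <= C * S ^ 3 ->
  r <= 2 * C * T ^ 3 / q0 * Rabs phi.
Proof.
  intros Hq0 HQp [HS HST] Hr Hb.
  rewrite Rabs_mult, <- RPow_abs in Hb.
  assert (Pphi : 0 < Rabs phi).
  { destruct (Req_dec (Rabs phi) 0) as [Z|Z]; [rewrite Z in HST; lra|].
    assert (T0 := Rabs_pos phi); lra. }
  assert (HS3 : 0 < S ^ 3) by (apply pow_lt; lra).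
  assert (HC : 0 <= C).
  { apply Rmult_le_reg_r with (S ^ 3); [exact HS3|]; rewrite Rmult_0_l.
    eapply Rle_trans; [|exact Hb]; apply Rmult_le_pos; [apply Rmult_le_pos; [apply pow_le|]|]; lra. }
  assert (HST3 : S ^ 3 <= (Rabs phi * T) ^ 3) by (apply pow_incr; lra).
  assert (Hmain : Rabs phi ^ 2 * (q0 / 2 * r) <= Rabs phi ^ 2 * (C * T ^ 3 * Rabs phi)).
  { apply Rle_trans with (Rabs phi ^ 2 * Rabs Qp * r).
    - rewrite Rmult_assoc; apply Rmult_le_compat_l; [apply pow_le; lra|].
      apply Rmult_le_compat_r; lra.
    - eapply Rle_trans; [exact Hb|].
      replace (Rabs phi ^ 2 * (C * T ^ 3 * Rabs phi)) with (C * (Rabs phi * T) ^ 3) by ring.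
      apply Rmult_le_compat_l; lra. }
  apply Rmult_le_reg_l in Hmain; [|apply pow_lt; lra].
  apply Rmult_le_reg_l with (q0 / 2); [lra|].
  eapply Rle_trans; [exact Hmain | right; field; lra].
Qed.

Lemma Rabs_div_sub_le f phi V eta : phi <> 0 -> Rabs (f - phi * V) <= eta * Rabs phi ->
  Rabs (f / phi - V) <= eta.
Proof.
  intros Hphi Hf; assert (Pphi : 0 < Rabs phi) by (apply Rabs_pos_lt, Hphi).
  replace (f / phi - V) with ((f - phi * V) / phi) by (field; exact Hphi).
  rewrite Rabs_div by exact Hphi; apply Rmult_le_reg_r with (Rabs phi); [exact Pphi|].
  unfold Rdiv; rewrite Rmult_assoc, Rinv_l, Rmult_1_r by lra; exact Hf.
Qed.

(* Along (f1, f2) ~ phi V the curvature form scales like phi^2 while the bound scales like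
   |phi|^3, so the bound [|Q| r <= C |f|^3] turns into [r <= K |phi|]. *)
Lemma curv_bound_direction_controls_dist (f1 f2 c1 c2 c3 : R -> R -> R) a b V1 V2 C dH :
  curv_form (c1 a b) (c2 a b) (c3 a b) V1 V2 <> 0 ->
  cont2 c1 a b -> cont2 c2 a b -> cont2 c3 a b -> 0 < dH ->
  (forall x y, dist2 x y a b < dH -> ~ (f1 x y = 0 /\ f2 x y = 0) ->
     Rabs (curv_form (c1 x y) (c2 x y) (c3 x y) (f1 x y) (f2 x y)) * dist2 x y a b
       <= C * sqrt (f1 x y ^ 2 + f2 x y ^ 2) ^ 3) ->
  direction_controls_dist f1 f2 a b V1 V2.
Proof.
  intros HQ0 Hc1 Hc2 Hc3 HdH Hbound.
  assert (Hq0 : 0 < Rabs (curv_form (c1 a b) (c2 a b) (c3 a b) V1 V2)) by (apply Rabs_pos_lt, HQ0).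
  destruct (curv_form_bounded_below _ _ _ _ _ HQ0) as [eta [Heta [Heta1 Hlow]]].
  destruct (cont2_box _ _ _ Hc1 eta Heta) as [d1 [Hd1 H1]].
  destruct (cont2_box _ _ _ Hc2 eta Heta) as [d2 [Hd2 H2]].
  destruct (cont2_box _ _ _ Hc3 eta Heta) as [d3 [Hd3 H3]].
  set (del := Rmin (Rmin d1 d2) (Rmin d3 (dH / 2))).
  assert (Hdel : del <= d1 /\ del <= d2 /\ del <= d3 /\ del <= dH / 2).
  { unfold del; assert (M1 := Rmin_l (Rmin d1 d2) (Rmin d3 (dH / 2)));
    assert (M2 := Rmin_r (Rmin d1 d2) (Rmin d3 (dH / 2))); assert (M3 := Rmin_l d1 d2);
    assert (M4 := Rmin_r d1 d2); assert (M5 := Rmin_l d3 (dH / 2)); assert (M6 := Rmin_r d3 (dH / 2)).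
    lra. }
  set (T := Rabs V1 + Rabs V2 + 2).
  exists eta, (2 * C * T ^ 3 / Rabs (curv_form (c1 a b) (c2 a b) (c3 a b) V1 V2)), del.
  split; [exact Heta|]; split; [unfold del; repeat apply Rmin_glb_lt; lra|].
  intros x y phi Hx Hy Hphi E1 E2.
  set (A := f1 x y / phi); set (B := f2 x y / phi).
  assert (Ef : f1 x y = phi * A /\ f2 x y = phi * B) by (unfold A, B; split; field; exact Hphi).
  assert (HA := Rabs_div_sub_le _ _ _ _ Hphi E1); assert (HB := Rabs_div_sub_le _ _ _ _ Hphi E2).
  fold A in HA; fold B in HB.
  assert (HQp := Hlow (c1 x y) (c2 x y) (c3 x y) A B
    ltac:(left; apply H1; lra) ltac:(left; apply H2; lra) ltac:(left; apply H3; lra) HA HB).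
  assert (Hnz : ~ (f1 x y = 0 /\ f2 x y = 0)).
  { intros [Z1 Z2]; assert (ZA : A = 0) by (unfold A; rewrite Z1; unfold Rdiv; ring).
    assert (ZB : B = 0) by (unfold B; rewrite Z2; unfold Rdiv; ring).
    rewrite ZA, ZB in HQp.
    replace (curv_form (c1 x y) (c2 x y) (c3 x y) 0 0) with 0 in HQp by (unfold curv_form; ring).
    rewrite Rabs_R0 in HQp; lra. }
  assert (Hb := Hbound x y ltac:(assert (T1 := dist2_le_Rabs_sum x y a b); lra) Hnz).
  destruct Ef as [Ef1 Ef2]; rewrite Ef1, Ef2 in Hb.
  replace (curv_form (c1 x y) (c2 x y) (c3 x y) (phi * A) (phi * B))
    with (phi ^ 2 * curv_form (c1 x y) (c2 x y) (c3 x y) A B) in Hb by (unfold curv_form; ring).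
  apply (dist_le_of_scaled_bound phi (curv_form (c1 x y) (c2 x y) (c3 x y) A B) _ T
    (sqrt ((phi * A) ^ 2 + (phi * B) ^ 2))); auto; [split|apply sqrt_pos].
  - apply sqrt_lt_R0, sum_sq_pos; rewrite <- Ef1, <- Ef2; exact Hnz.
  - eapply Rle_trans; [apply sqrt_sum_sq_le|]; rewrite !Rabs_mult.
    assert (Rabs A <= Rabs V1 + 1) by (assert (T1 := Rabs_triang_inv A V1); lra).
    assert (Rabs B <= Rabs V2 + 1) by (assert (T1 := Rabs_triang_inv B V2); lra).
    assert (T0 := Rabs_pos phi); unfold T; nra.
Qed.

Lemma direction_controls_dist_rotate f1 f2 a b n1 n2 k0 : 0 < n1 ^ 2 + n2 ^ 2 ->
  direction_controls_dist f1 f2 a b (k0 * n1 - n2) (k0 * n2 + n1) ->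
  direction_controls_dist (fun x y => n1 * f1 x y + n2 * f2 x y)
    (fun x y => - n2 * f1 x y + n1 * f2 x y) a b k0 1.
Proof.
  intros HN [eta [K [del [Heta [Hdel Hd]]]]].
  set (N := n1 ^ 2 + n2 ^ 2) in *; set (L := Rabs n1 + Rabs n2 + 1).
  assert (HL : 0 < L) by (unfold L; assert (T1 := Rabs_pos n1); assert (T2 := Rabs_pos n2); lra).
  exists (eta / L), (K / N), del; split; [apply Rdiv_lt_0_compat; lra|]; split; [exact Hdel|].
  intros x y phi Hx Hy Hphi EG EW.
  assert (Hsmall : forall p q, Rabs p + Rabs q <= L -> Rabs ((p * (n1 * f1 x y + n2 * f2 x y - phi * k0)
      + q * (- n2 * f1 x y + n1 * f2 x y - phi * 1)) / N) <= eta * Rabs (phi / N)).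
  { intros p q Hpq; rewrite !Rabs_div, (Rabs_right N) by lra; unfold Rdiv.
    rewrite <- Rmult_assoc; apply Rmult_le_compat_r; [apply Rlt_le, Rinv_0_lt_compat; lra|].
    eapply Rle_trans; [apply (Rabs_lin2_le _ _ _ _ (eta / L * Rabs phi)); assumption|].
    apply Rle_trans with (L * (eta / L * Rabs phi)); [|right; field; lra].
    apply Rmult_le_compat_r; [apply Rmult_le_pos; [apply Rlt_le, Rdiv_lt_0_compat | apply Rabs_pos]|]; lra. }
  apply Rle_trans with (K * Rabs (phi / N)); [apply Hd; auto|].
  - apply Rmult_integral_contrapositive_currified; [exact Hphi | apply Rinv_neq_0_compat; lra].
  - replace (f1 x y - phi / N * (k0 * n1 - n2)) with ((n1 * (n1 * f1 x y + n2 * f2 x y - phi * k0)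
      + (- n2) * (- n2 * f1 x y + n1 * f2 x y - phi * 1)) / N) by (unfold N in *; field; lra).
    apply Hsmall; rewrite Rabs_Ropp; unfold L; lra.
  - replace (f2 x y - phi / N * (k0 * n2 + n1)) with ((n2 * (n1 * f1 x y + n2 * f2 x y - phi * k0)
      + n1 * (- n2 * f1 x y + n1 * f2 x y - phi * 1)) / N) by (unfold N in *; field; lra).
    apply Hsmall; unfold L; lra.
  - rewrite Rabs_div, (Rabs_right N) by lra; right; field; lra.
Qed.

Lemma gradient_shift nu1 nu2 w : 0 < nu1 ^ 2 + nu2 ^ 2 ->
  nu1 * (w * nu1 / (nu1 ^ 2 + nu2 ^ 2)) + nu2 * (w * nu2 / (nu1 ^ 2 + nu2 ^ 2)) = w /\
  Rabs (w * nu1 / (nu1 ^ 2 + nu2 ^ 2)) + Rabs (w * nu2 / (nu1 ^ 2 + nu2 ^ 2))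
    = (Rabs nu1 + Rabs nu2) / (nu1 ^ 2 + nu2 ^ 2) * Rabs w.
Proof.
  intros HN; split; [field; lra|].
  rewrite !Rabs_div, !Rabs_mult, (Rabs_right (nu1 ^ 2 + nu2 ^ 2)) by lra; field; lra.
Qed.

(* Moving from a zero p of G by k0 W(p) along the gradient of G produces a point where
   (G, W) ~ W(p) (k0, 1), at distance o(|p - (a, b)|) from p. *)
Lemma shift_along_gradient G W a b nu1 nu2 k0 :
  is_strict_derive2 G a b nu1 nu2 -> 0 < nu1 ^ 2 + nu2 ^ 2 ->
  is_strict_derive2 W a b 0 0 -> W a b = 0 ->
  forall eps, 0 < eps -> exists del, 0 < del /\
    forall x y, Rabs (x - a) < del -> Rabs (y - b) < del -> G x y = 0 ->
    exists x' y', Rabs (x' - x) + Rabs (y' - y) <= eps * (Rabs (x - a) + Rabs (y - b)) /\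
      Rabs (W x y) <= eps * (Rabs (x - a) + Rabs (y - b)) /\
      Rabs (G x' y' - W x y * k0) <= eps * Rabs (W x y) /\
      Rabs (W x' y' - W x y * 1) <= eps * Rabs (W x y).
Proof.
  intros SG HNu SW W0 eps Heps; set (Nu := nu1 ^ 2 + nu2 ^ 2) in *.
  set (L := (Rabs nu1 + Rabs nu2) / Nu * (Rabs k0 + 1)).
  assert (HL : 0 <= L) by (unfold L; assert (T1 := Rabs_pos nu1); assert (T2 := Rabs_pos nu2);
    assert (T3 := Rabs_pos k0); apply Rmult_le_pos; [apply Rmult_le_pos; [|apply Rlt_le, Rinv_0_lt_compat]|]; lra).
  set (e := Rmin eps 1 / (L + 1)); assert (M1 := Rmin_l eps 1); assert (M2 := Rmin_r eps 1).
  assert (He : 0 < e) by (apply Rdiv_lt_0_compat; [apply Rmin_glb_lt|]; lra).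
  assert (HeL : e * (L + 1) = Rmin eps 1) by (unfold e; field; lra).
  destruct (SG _ He) as [dG [HdG HG]]; destruct (SW _ He) as [dW [HdW HW]].
  assert (M3 := Rmin_l dG dW); assert (M4 := Rmin_r dG dW).
  exists (Rmin dG dW / 3); split; [apply Rdiv_lt_0_compat; [apply Rmin_glb_lt|]; lra|].
  intros x y Hx Hy HGp; set (g := W x y); set (S := Rabs (x - a) + Rabs (y - b)).
  assert (HS : 0 <= S) by (unfold S; assert (T1 := Rabs_pos (x - a)); assert (T2 := Rabs_pos (y - b)); lra).
  assert (Hg : Rabs g <= e * S).
  { assert (T := HW x y a b ltac:(lra) ltac:(lra) ltac:(rewrite Rminus_diag, Rabs_R0; lra)
      ltac:(rewrite Rminus_diag, Rabs_R0; lra)).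
    rewrite W0 in T; replace (W x y - 0 - (0 * (x - a) + 0 * (y - b))) with g in T by (unfold g; ring).
    exact T. }
  destruct (gradient_shift nu1 nu2 (k0 * g) HNu) as [Hdot Habs]; fold Nu in Hdot, Habs.
  set (c1 := k0 * g * nu1 / Nu) in *; set (c2 := k0 * g * nu2 / Nu) in *.
  assert (Hc : Rabs c1 + Rabs c2 <= L * Rabs g).
  { rewrite Habs, Rabs_mult; unfold L; rewrite Rmult_assoc.
    apply Rmult_le_compat_l; [apply Rmult_le_pos; [apply Rplus_le_le_0_compat; apply Rabs_pos
      | apply Rlt_le, Rinv_0_lt_compat; lra]|].
    apply Rmult_le_compat_r; [apply Rabs_pos | lra]. }
  assert (HLg : L * Rabs g <= e * L * S)
    by (apply Rle_trans with (L * (e * S)); [apply Rmult_le_compat_l | right; ring]; lra).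
  assert (HeS : e * S <= Rmin eps 1 * S /\ e * L * S <= Rmin eps 1 * S)
    by (rewrite <- HeL; split; apply Rmult_le_compat_r; nra).
  assert (T1 := Rabs_pos c1); assert (T2 := Rabs_pos c2).
  assert (Hm : Rmin eps 1 * S <= eps * S /\ Rmin eps 1 * S <= S)
    by (split; [|rewrite <- (Rmult_1_l S) at 2]; apply Rmult_le_compat_r; lra).
  assert (Hc' : Rabs (x + c1 - a) < Rmin dG dW /\ Rabs (y + c2 - b) < Rmin dG dW).
  { split; [replace (x + c1 - a) with (c1 + (x - a)) by ring | replace (y + c2 - b) with (c2 + (y - b)) by ring];
    (eapply Rle_lt_trans; [apply Rabs_triang|]); unfold S in *; lra. }
  assert (Herr : e * (Rabs c1 + Rabs c2) <= eps * Rabs g).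
  { apply Rle_trans with (e * L * Rabs g); [rewrite Rmult_assoc; apply Rmult_le_compat_l; lra|].
    apply Rmult_le_compat_r; [apply Rabs_pos|]; nra. }
  exists (x + c1), (y + c2); replace (x + c1 - x) with c1 by ring; replace (y + c2 - y) with c2 by ring.
  split; [lra|]; split; [lra|]; split.
  - assert (T := HG (x + c1) (y + c2) x y ltac:(lra) ltac:(lra) ltac:(lra) ltac:(lra)).
    replace (x + c1 - x) with c1 in T by ring; replace (y + c2 - y) with c2 in T by ring.
    rewrite HGp, Hdot, Rminus_0_r, (Rmult_comm k0) in T; lra.
  - assert (T := HW (x + c1) (y + c2) x y ltac:(lra) ltac:(lra) ltac:(lra) ltac:(lra)).
    replace (W (x + c1) (y + c2) - W x y - (0 * (x + c1 - x) + 0 * (y + c2 - y)))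
      with (W (x + c1) (y + c2) - g * 1) in T by (unfold g; ring).
    replace (x + c1 - x) with c1 in T by ring; replace (y + c2 - y) with c2 in T by ring; lra.
Qed.

(* If some zero p of G had W(p) <> 0, the shifted point would be at distance ~|p - (a, b)|
   from (a, b), yet at distance O(|W(p)|) = o(|p - (a, b)|) by [direction_controls_dist]. *)
Lemma flat_combination_zero_set G W a b nu1 nu2 k0 :
  is_strict_derive2 G a b nu1 nu2 -> 0 < nu1 ^ 2 + nu2 ^ 2 ->
  is_strict_derive2 W a b 0 0 -> W a b = 0 ->
  direction_controls_dist G W a b k0 1 ->
  exists del, 0 < del /\ forall x y, Rabs (x - a) < del -> Rabs (y - b) < del ->
    G x y = 0 -> W x y = 0.
Proof.
  intros SG HNu SW W0 [eta [K [d0 [Heta [Hd0 Hforce]]]]].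
  assert (HK := Rabs_pos K).
  set (eps := Rmin eta (1 / (8 * (Rabs K + 1)))).
  assert (Heps : 0 < eps) by (apply Rmin_glb_lt; [|apply Rdiv_lt_0_compat]; lra).
  assert (Heps1 : eps <= eta) by apply Rmin_l.
  assert (Heps2 : eps * (Rabs K + 1) <= 1 / 8).
  { apply Rle_trans with (1 / (8 * (Rabs K + 1)) * (Rabs K + 1)); [|right; field; lra].
    apply Rmult_le_compat_r; [lra | apply Rmin_r]. }
  destruct (shift_along_gradient G W a b nu1 nu2 k0 SG HNu SW W0 eps Heps) as [d1 [Hd1 Hshift]].
  assert (M1 := Rmin_l d1 (d0 / 2)); assert (M2 := Rmin_r d1 (d0 / 2)).
  exists (Rmin d1 (d0 / 2)); split; [apply Rmin_glb_lt; lra|].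
  intros x y Hx Hy HGp; destruct (Req_dec (W x y) 0) as [|Hg]; [assumption | exfalso].
  destruct (Hshift x y ltac:(lra) ltac:(lra) HGp) as [x' [y' [Hp' [Hg_S [EG EW]]]]].
  set (S := Rabs (x - a) + Rabs (y - b)) in *.
  assert (T1 := Rabs_triang_inv (x - a) (x - x')); assert (T2 := Rabs_triang_inv (y - b) (y - y')).
  replace (x - a - (x - x')) with (x' - a) in T1 by ring; replace (y - b - (y - y')) with (y' - b) in T2 by ring.
  rewrite (Rabs_minus_sym x x') in T1; rewrite (Rabs_minus_sym y y') in T2.
  assert (T3 := Rabs_triang (x' - x) (x - a)); assert (T4 := Rabs_triang (y' - y) (y - b)).
  replace (x' - x + (x - a)) with (x' - a) in T3 by ring; replace (y' - y + (y - b)) with (y' - b) in T4 by ring.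
  assert (HS : 0 <= S) by (unfold S; assert (T5 := Rabs_pos (x - a)); assert (T6 := Rabs_pos (y - b)); lra).
  assert (eps * S <= S / 8) by nra.
  assert (Hrel : eps * Rabs (W x y) <= eta * Rabs (W x y))
    by (apply Rmult_le_compat_r; [apply Rabs_pos | exact Heps1]).
  assert (Hdist := Hforce x' y' (W x y) ltac:(unfold S in *; lra) ltac:(unfold S in *; lra) Hg
    ltac:(lra) ltac:(lra)).
  assert (Hfar := Rabs_sum_le_dist2 x' y' a b).
  assert (Hnear : K * Rabs (W x y) <= S / 8).
  { apply Rle_trans with (Rabs K * Rabs (W x y)); [apply Rmult_le_compat_r; [apply Rabs_pos | apply Rle_abs]|].
    apply Rle_trans with (Rabs K * (eps * S)); [apply Rmult_le_compat_l; lra|].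
    replace (Rabs K * (eps * S)) with (eps * Rabs K * S) by ring.
    apply Rle_trans with (1 / 8 * S); [apply Rmult_le_compat_r; lra | lra]. }
  assert (S = 0) by (unfold S in *; lra).
  assert (Rabs (W x y) = 0) by (assert (T5 := Rabs_pos (W x y)); nra).
  apply Hg, Rabs_eq_0; assumption.
Qed.

(** * An implicit function theorem *)

Section PerturbedLinear.

Variables (Phi : R -> R -> R) (Nu eta : R).
Hypothesis Nu_pos : 0 < Nu.
Hypothesis eta_pos : 0 < eta.
Hypothesis Phi_00 : Phi 0 0 = 0.
Hypothesis Phi_near_linear : forall s h t k,
  Rabs s < eta -> Rabs h < eta -> Rabs t < eta -> Rabs k < eta ->
  Rabs (Phi s h - Phi t k - Nu * (h - k)) <= Nu / 4 * (Rabs (s - t) + Rabs (h - k)).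

Lemma perturbed_linear_lipschitz s h t k :
  Rabs s < eta -> Rabs h < eta -> Rabs t < eta -> Rabs k < eta ->
  Phi s h = 0 -> Phi t k = 0 -> Rabs (h - k) <= Rabs (s - t) / 3.
Proof.
  intros Hs Hh Ht Hk E1 E2; assert (T := Phi_near_linear s h t k Hs Hh Ht Hk).
  rewrite E1, E2, Rminus_diag, Rminus_0_l, Rabs_Ropp, Rabs_mult, (Rabs_right Nu) in T by lra.
  assert (0 <= Rabs (h - k)) by apply Rabs_pos; nra.
Qed.

Lemma perturbed_linear_root_exists s : Rabs s < eta ->
  exists h, Rabs h < eta /\ Phi s h = 0.
Proof.
  intros Hs.
  assert (H0 : Rabs 0 < eta) by (rewrite Rabs_R0; lra).
  assert (Hs0 : Rabs (Phi s 0) <= Nu / 4 * Rabs s).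
  { assert (T := Phi_near_linear s 0 0 0 Hs H0 H0 H0).
    replace (Phi s 0 - Phi 0 0 - Nu * (0 - 0)) with (Phi s 0) in T by (rewrite Phi_00; ring).
    rewrite Rminus_0_r, Rminus_diag, Rabs_R0, Rplus_0_r in T; exact T. }
  assert (Hlin : forall h, Rabs h < eta -> Rabs (Phi s h - Phi s 0 - Nu * h) <= Nu / 4 * Rabs h).
  { intros h Hh; assert (T := Phi_near_linear s h s 0 Hs Hh Hs H0).
    rewrite Rminus_diag, Rabs_R0, Rplus_0_l, !Rminus_0_r in T; exact T. }
  assert (Hp := Hlin (eta / 2) ltac:(rewrite Rabs_right; lra)).
  assert (Hm := Hlin (- (eta / 2)) ltac:(rewrite Rabs_Ropp, Rabs_right; lra)).
  rewrite Rabs_Ropp, (Rabs_right (eta / 2)) in Hm by lra.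
  rewrite (Rabs_right (eta / 2)) in Hp by lra.
  apply Rabs_le_between in Hp; apply Rabs_le_between in Hm; apply Rabs_le_between in Hs0.
  assert (Nu / 4 * Rabs s < Nu / 4 * eta) by (apply Rmult_lt_compat_l; lra).
  destruct (Ranalysis5.IVT_interv (Phi s) (- (eta / 2)) (eta / 2)) as [z [Hz1 Hz2]];
    [|lra|lra|lra|exists z; split; [apply Rabs_def1; lra | exact Hz2]].
  intros h Hh; apply continuity_pt_epsilon; intros e He.
  assert (Hn1 := Rmin_l (eta / 2) (e / (2 * Nu))); assert (Hn2 := Rmin_r (eta / 2) (e / (2 * Nu))).
  exists (Rmin (eta / 2) (e / (2 * Nu)));
    split; [apply Rmin_glb_lt; [lra | apply Rdiv_lt_0_compat; lra]|].
  intros y Hy; apply Rabs_def2 in Hy.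
  assert (T := Phi_near_linear s y s h Hs ltac:(apply Rabs_def1; lra) Hs
    ltac:(apply Rabs_def1; lra)).
  rewrite Rminus_diag, Rabs_R0, Rplus_0_l in T.
  assert (Hyh : Rabs (y - h) < e / (2 * Nu)) by (apply Rabs_def1; lra).
  assert (T2 := Rabs_triang (Phi s y - Phi s h - Nu * (y - h)) (Nu * (y - h))).
  replace (Phi s y - Phi s h - Nu * (y - h) + Nu * (y - h)) with (Phi s y - Phi s h) in T2 by ring.
  rewrite Rabs_mult, (Rabs_right Nu) in T2 by lra.
  assert (Nu * Rabs (y - h) < e / 2) by
    (apply Rlt_le_trans with (Nu * (e / (2 * Nu))); [apply Rmult_lt_compat_l | right; field]; lra).
  assert (0 <= Rabs (y - h)) by apply Rabs_pos; nra.
Qed.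

Lemma perturbed_linear_graph : exists phi : R -> R, phi 0 = 0 /\
  (forall s, Rabs s < eta -> Rabs (phi s) < eta /\ Phi s (phi s) = 0) /\
  (forall s h, Rabs s < eta -> Rabs h < eta -> Phi s h = 0 -> h = phi s) /\
  (forall s t, Rabs s < eta -> Rabs t < eta -> Rabs (phi s - phi t) <= Rabs (s - t) / 3).
Proof.
  set (phi := fun s => epsilon (inhabits 0) (fun h => Rabs h < eta /\ Phi s h = 0)).
  assert (Hphi : forall s, Rabs s < eta -> Rabs (phi s) < eta /\ Phi s (phi s) = 0)
    by (intros s Hs; apply epsilon_spec, perturbed_linear_root_exists, Hs).
  assert (Huniq : forall s h, Rabs s < eta -> Rabs h < eta -> Phi s h = 0 -> h = phi s).
  { intros s h Hs Hh E; destruct (Hphi s Hs) as [A1 A2].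
    assert (T := perturbed_linear_lipschitz s h s (phi s) Hs Hh Hs A1 E A2).
    rewrite Rminus_diag, Rabs_R0 in T; assert (T' := Rabs_pos (h - phi s)).
    apply Rminus_diag_uniq, Rabs_eq_0; lra. }
  assert (H0 : Rabs 0 < eta) by (rewrite Rabs_R0; lra).
  exists phi; split; [symmetry; apply Huniq; auto|]; split; [exact Hphi|]; split; [exact Huniq|].
  intros s t Hs Ht; destruct (Hphi s Hs); destruct (Hphi t Ht).
  apply perturbed_linear_lipschitz; auto.
Qed.

End PerturbedLinear.

(* The Moebius transformation mapping -1, 0, 1 to -e1, 0, e2: it reparametrizes the
   asymmetric interval (-e1, e2) by the symmetric (-1, 1) while keeping 0 fixed. *)
Definition moebius (e1 e2 t : R) : R := 2 * e1 * e2 * t / ((e1 + e2) + (e1 - e2) * t).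
Definition moebius_deriv (e1 e2 t : R) : R :=
  2 * e1 * e2 * (e1 + e2) / ((e1 + e2) + (e1 - e2) * t) ^ 2.

Section Moebius.

Variables e1 e2 : R.
Hypothesis e1_pos : 0 < e1.
Hypothesis e2_pos : 0 < e2.

Lemma moebius_den_pos t : -1 < t < 1 -> 0 < (e1 + e2) + (e1 - e2) * t.
Proof.
  intros Ht; replace ((e1 + e2) + (e1 - e2) * t) with (e1 * (1 + t) + e2 * (1 - t)) by ring.
  assert (0 < e1 * (1 + t)) by (apply Rmult_lt_0_compat; lra).
  assert (0 < e2 * (1 - t)) by (apply Rmult_lt_0_compat; lra); lra.
Qed.

Lemma moebius0 : moebius e1 e2 0 = 0.
Proof. unfold moebius; field; lra. Qed.

Lemma moebius_range t : -1 < t < 1 -> - e1 < moebius e1 e2 t < e2.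
Proof.
  intros Ht; assert (Hd := moebius_den_pos t Ht); unfold moebius.
  assert (0 < e1 * ((e1 + e2) * (1 + t))) by (apply Rmult_lt_0_compat; [|apply Rmult_lt_0_compat]; lra).
  assert (0 < e2 * ((e1 + e2) * (1 - t))) by (apply Rmult_lt_0_compat; [|apply Rmult_lt_0_compat]; lra).
  split; apply Rmult_lt_reg_r with ((e1 + e2) + (e1 - e2) * t); auto;
    unfold Rdiv; rewrite Rmult_assoc, Rinv_l, Rmult_1_r by lra.
  - assert (E : 2 * e1 * e2 * t - - e1 * ((e1 + e2) + (e1 - e2) * t) = e1 * ((e1 + e2) * (1 + t)))
      by ring; lra.
  - assert (E : e2 * ((e1 + e2) + (e1 - e2) * t) - 2 * e1 * e2 * t = e2 * ((e1 + e2) * (1 - t)))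
      by ring; lra.
Qed.

Lemma moebius_inj s t : -1 < s < 1 -> -1 < t < 1 -> moebius e1 e2 s = moebius e1 e2 t -> s = t.
Proof.
  intros Hs Ht E; assert (Ds := moebius_den_pos s Hs); assert (Dt := moebius_den_pos t Ht).
  unfold moebius in E; apply Rmult_eq_reg_l with (2 * e1 * e2 * (e1 + e2)); [|apply Rgt_not_eq; repeat apply Rmult_lt_0_compat; lra].
  apply (Rmult_eq_compat_r (((e1 + e2) + (e1 - e2) * s) * ((e1 + e2) + (e1 - e2) * t))) in E.
  replace (2 * e1 * e2 * s / (e1 + e2 + (e1 - e2) * s) * ((e1 + e2 + (e1 - e2) * s)
    * (e1 + e2 + (e1 - e2) * t))) with (2 * e1 * e2 * (s * (e1 + e2 + (e1 - e2) * t))) in E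
    by (field; lra).
  replace (2 * e1 * e2 * t / (e1 + e2 + (e1 - e2) * t) * ((e1 + e2 + (e1 - e2) * s)
    * (e1 + e2 + (e1 - e2) * t))) with (2 * e1 * e2 * (t * (e1 + e2 + (e1 - e2) * s))) in E
    by (field; lra).
  lra.
Qed.

Lemma moebius_surj s : - e1 < s < e2 -> exists t, -1 < t < 1 /\ moebius e1 e2 t = s.
Proof.
  intros Hs; set (dd := 2 * e1 * e2 - (e1 - e2) * s).
  assert (Hdd : 0 < dd).
  { unfold dd; replace (2 * e1 * e2 - (e1 - e2) * s) with (e1 * (e2 - s) + e2 * (e1 + s)) by ring.
    assert (0 < e1 * (e2 - s)) by (apply Rmult_lt_0_compat; lra).
    assert (0 < e2 * (e1 + s)) by (apply Rmult_lt_0_compat; lra); lra. }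
  assert (0 < (s + e1) * (2 * e2)) by (apply Rmult_lt_0_compat; lra).
  assert (0 < (e2 - s) * (2 * e1)) by (apply Rmult_lt_0_compat; lra).
  exists (s * (e1 + e2) / dd); split; [split|].
  - apply Rmult_lt_reg_r with dd; auto; unfold Rdiv; rewrite Rmult_assoc, Rinv_l, Rmult_1_r by lra.
    assert (E : s * (e1 + e2) + dd = (s + e1) * (2 * e2)) by (unfold dd; ring); lra.
  - apply Rmult_lt_reg_r with dd; auto; unfold Rdiv; rewrite Rmult_assoc, Rinv_l, Rmult_1_r by lra.
    assert (E : dd - s * (e1 + e2) = (e2 - s) * (2 * e1)) by (unfold dd; ring); lra.
  - unfold moebius.
    replace ((e1 + e2) + (e1 - e2) * (s * (e1 + e2) / dd)) with ((e1 + e2) * (2 * e1 * e2) / dd)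
      by (unfold dd in *; field; lra).
    field; split; [lra | split; lra].
Qed.

Lemma moebius_derive t : -1 < t < 1 -> is_derive (moebius e1 e2) t (moebius_deriv e1 e2 t).
Proof.
  intros Ht; assert (Hd := moebius_den_pos t Ht).
  unfold moebius, moebius_deriv; auto_derive; [lra | field; lra].
Qed.

Lemma moebius_deriv_pos t : -1 < t < 1 -> 0 < moebius_deriv e1 e2 t.
Proof.
  intros Ht; assert (Hd := moebius_den_pos t Ht); unfold moebius_deriv.
  apply Rdiv_lt_0_compat; [|apply pow_lt; lra].
  repeat apply Rmult_lt_0_compat; lra.
Qed.

Lemma moebius_continuous t : -1 < t < 1 -> continuity_pt (moebius e1 e2) t.
Proof.
  intros Ht; apply continuity_pt_filterlim, (ex_derive_continuous (moebius e1 e2)).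
  exists (moebius_deriv e1 e2 t); apply moebius_derive, Ht.
Qed.

Lemma moebius_deriv_continuous t : -1 < t < 1 -> continuity_pt (moebius_deriv e1 e2) t.
Proof.
  intros Ht; assert (Hd := moebius_den_pos t Ht).
  apply continuity_pt_filterlim, (ex_derive_continuous (moebius_deriv e1 e2)).
  unfold moebius_deriv; auto_derive; rewrite Rmult_1_r; apply Rgt_not_eq, Rmult_lt_0_compat; lra.
Qed.

End Moebius.

(* Coordinates adapted to a vector (nu1, nu2): s runs along (-nu2, nu1), h along (nu1, nu2). *)
Definition frame1 (a nu1 nu2 s h : R) : R := a - s * nu2 + h * nu1.
Definition frame2 (b nu1 nu2 s h : R) : R := b + s * nu1 + h * nu2.

Lemma frame_step_le a b nu1 nu2 s h t k :
  Rabs (frame1 a nu1 nu2 s h - frame1 a nu1 nu2 t k)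
    + Rabs (frame2 b nu1 nu2 s h - frame2 b nu1 nu2 t k)
  <= (Rabs nu1 + Rabs nu2) * (Rabs (s - t) + Rabs (h - k)).
Proof.
  unfold frame1, frame2.
  replace (a - s * nu2 + h * nu1 - (a - t * nu2 + k * nu1)) with ((- nu2) * (s - t) + nu1 * (h - k))
    by ring.
  replace (b + s * nu1 + h * nu2 - (b + t * nu1 + k * nu2)) with (nu1 * (s - t) + nu2 * (h - k))
    by ring.
  assert (T1 := Rabs_lin2 (- nu2) nu1 (s - t) (h - k)); assert (T2 := Rabs_lin2 nu1 nu2 (s - t) (h - k)).
  rewrite Rabs_Ropp in T1; lra.
Qed.

Lemma frame_sq a b nu1 nu2 s h :
  (frame1 a nu1 nu2 s h - a) ^ 2 + (frame2 b nu1 nu2 s h - b) ^ 2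
    = (nu1 ^ 2 + nu2 ^ 2) * (s ^ 2 + h ^ 2).
Proof. unfold frame1, frame2; ring. Qed.

Lemma is_derive_frame1 a nu1 nu2 (f k : R -> R) t df dk :
  is_derive f t df -> is_derive k t dk ->
  is_derive (fun t => frame1 a nu1 nu2 (f t) (k t)) t (- df * nu2 + dk * nu1).
Proof.
  intros Hf Hk; unfold frame1; auto_derive; [repeat split; eexists; eassumption|].
  change (fun x => f x) with f; change (fun x => k x) with k.
  rewrite (is_derive_unique _ _ _ Hf), (is_derive_unique _ _ _ Hk); ring.
Qed.

Lemma is_derive_frame2 b nu1 nu2 (f k : R -> R) t df dk :
  is_derive f t df -> is_derive k t dk ->
  is_derive (fun t => frame2 b nu1 nu2 (f t) (k t)) t (df * nu1 + dk * nu2).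
Proof.
  intros Hf Hk; unfold frame2; auto_derive; [repeat split; eexists; eassumption|].
  change (fun x => f x) with f; change (fun x => k x) with k.
  rewrite (is_derive_unique _ _ _ Hf), (is_derive_unique _ _ _ Hk); ring.
Qed.

Section ImplicitCurve.

Variables (G gx gy : R -> R -> R) (a b rho : R).
Let nu1 := gx a b.
Let nu2 := gy a b.
Let Nu := nu1 ^ 2 + nu2 ^ 2.
Let M := Rabs nu1 + Rabs nu2.
Let X := frame1 a nu1 nu2.
Let Y := frame2 b nu1 nu2.

Hypothesis rho_pos : 0 < rho.
Hypothesis G_zero : G a b = 0.
Hypothesis grad_nz : 0 < Nu.
Hypothesis G_strict : forall x y, Rabs (x - a) < rho -> Rabs (y - b) < rho ->
  is_strict_derive2 G x y (gx x y) (gy x y).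
Hypothesis grad_cont : forall x y, Rabs (x - a) < rho -> Rabs (y - b) < rho ->
  cont2 gx x y /\ cont2 gy x y.
Hypothesis grad_transversal : forall x y, Rabs (x - a) < rho -> Rabs (y - b) < rho ->
  Nu / 2 <= gx x y * nu1 + gy x y * nu2.

Lemma frame_coords x y : exists s h, X s h = x /\ Y s h = y /\
  Rabs s <= M * dist2 x y a b / Nu /\ Rabs h <= M * dist2 x y a b / Nu.
Proof.
  exists ((- nu2 * (x - a) + nu1 * (y - b)) / Nu), ((nu1 * (x - a) + nu2 * (y - b)) / Nu).
  split; [unfold X, frame1, Nu in *; field; lra|]; split; [unfold Y, frame2, Nu in *; field; lra|].
  assert (Bx := Rabs_le_dist2_l x y a b); assert (By := Rabs_le_dist2_r x y a b).
  assert (Bnd : forall p q, Rabs p + Rabs q = M ->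
    Rabs ((p * (x - a) + q * (y - b)) / Nu) <= M * dist2 x y a b / Nu).
  { intros p q Hpq; rewrite Rabs_div, (Rabs_right Nu) by lra.
    apply Rmult_le_compat_r; [apply Rlt_le, Rinv_0_lt_compat, grad_nz|].
    rewrite <- Hpq; eapply Rle_trans; [apply Rabs_lin2|].
    assert (0 <= Rabs p) by apply Rabs_pos; assert (0 <= Rabs q) by apply Rabs_pos; nra. }
  split; apply Bnd; [rewrite Rabs_Ropp|]; unfold M; ring.
Qed.

Lemma grad_abs_sum_pos : 0 < M.
Proof. apply sum_abs_pos, grad_nz. Qed.

Lemma frame_dot s h t k : nu1 * (X s h - X t k) + nu2 * (Y s h - Y t k) = Nu * (h - k).
Proof. unfold X, Y, frame1, frame2, Nu; ring. Qed.

Lemma implicit_graph : exists eta phi, 0 < eta /\ phi 0 = 0 /\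
  (forall s h, Rabs s < eta -> Rabs h < eta ->
     Rabs (X s h - a) < rho /\ Rabs (Y s h - b) < rho) /\
  (forall s, Rabs s < eta -> Rabs (phi s) < eta /\ G (X s (phi s)) (Y s (phi s)) = 0) /\
  (forall s h, Rabs s < eta -> Rabs h < eta -> G (X s h) (Y s h) = 0 -> h = phi s) /\
  (forall s t, Rabs s < eta -> Rabs t < eta -> Rabs (phi s - phi t) <= Rabs (s - t) / 3).
Proof.
  assert (HM := grad_abs_sum_pos).
  destruct (G_strict a b ltac:(rewrite Rminus_diag, Rabs_R0; lra)
    ltac:(rewrite Rminus_diag, Rabs_R0; lra) (Nu / (4 * M))) as [d0 [Hd0 HS]];
    [apply Rdiv_lt_0_compat; lra|].
  assert (Hr1 := Rmin_l d0 rho); assert (Hr2 := Rmin_r d0 rho); set (r := Rmin d0 rho) in *.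
  assert (Hr : 0 < r) by (apply Rmin_glb_lt; lra).
  set (eta := r / (2 * M)).
  assert (Heta : 0 < eta) by (apply Rdiv_lt_0_compat; lra).
  assert (Box : forall s h, Rabs s < eta -> Rabs h < eta -> Rabs (X s h - a) < r /\ Rabs (Y s h - b) < r).
  { intros s h Hs Hh; assert (T := frame_step_le a b nu1 nu2 s h 0 0).
    fold X Y M in T; replace (X 0 0) with a in T by (unfold X, frame1; ring).
    replace (Y 0 0) with b in T by (unfold Y, frame2; ring); rewrite !Rminus_0_r in T.
    assert (M * (Rabs s + Rabs h) < r).
    { apply Rlt_le_trans with (M * (2 * eta)); [apply Rmult_lt_compat_l; lra|].
      right; unfold eta; field; lra. }
    assert (T1 := Rabs_pos (X s h - a)); assert (T2 := Rabs_pos (Y s h - b)); lra. }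
  destruct (perturbed_linear_graph (fun s h => G (X s h) (Y s h)) Nu eta) as [phi [H0 [Hg [Hu HL]]]];
    auto.
  { replace (X 0 0) with a by (unfold X, frame1; ring); replace (Y 0 0) with b by (unfold Y, frame2; ring).
    exact G_zero. }
  - intros s h t k Hs Hh Ht Hk; destruct (Box s h Hs Hh); destruct (Box t k Ht Hk).
    assert (T := HS (X s h) (Y s h) (X t k) (Y t k) ltac:(lra) ltac:(lra) ltac:(lra) ltac:(lra)).
    rewrite frame_dot in T; eapply Rle_trans; [exact T|].
    apply Rle_trans with (Nu / (4 * M) * (M * (Rabs (s - t) + Rabs (h - k)))).
    + apply Rmult_le_compat_l; [apply Rlt_le, Rdiv_lt_0_compat; lra | apply frame_step_le].
    + right; field; lra.
  - exists eta, phi; split; [exact Heta|]; split; [exact H0|].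
    split; [intros s h Hs Hh; destruct (Box s h Hs Hh); split; lra|]; auto.
Qed.

Section Graph.

Variables (eta : R) (phi : R -> R).
Hypothesis eta_pos : 0 < eta.
Hypothesis frame_box : forall s h, Rabs s < eta -> Rabs h < eta ->
  Rabs (X s h - a) < rho /\ Rabs (Y s h - b) < rho.
Hypothesis phi_graph : forall s, Rabs s < eta ->
  Rabs (phi s) < eta /\ G (X s (phi s)) (Y s (phi s)) = 0.
Hypothesis phi_lipschitz : forall s t, Rabs s < eta -> Rabs t < eta ->
  Rabs (phi s - phi t) <= Rabs (s - t) / 3.

Let P1 s := X s (phi s).
Let P2 s := Y s (phi s).

Definition graph_slope (s : R) : R :=
  - (gy (P1 s) (P2 s) * nu1 - gx (P1 s) (P2 s) * nu2)
    / (gx (P1 s) (P2 s) * nu1 + gy (P1 s) (P2 s) * nu2).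

Lemma graph_in_box s : Rabs s < eta -> Rabs (P1 s - a) < rho /\ Rabs (P2 s - b) < rho.
Proof. intros Hs; apply frame_box; [exact Hs | apply phi_graph, Hs]. Qed.

Lemma graph_step s t : Rabs s < eta -> Rabs t < eta ->
  Rabs (P1 t - P1 s) + Rabs (P2 t - P2 s) <= 2 * M * Rabs (t - s).
Proof.
  intros Hs Ht; eapply Rle_trans; [apply frame_step_le|]; fold M.
  assert (T := phi_lipschitz t s Ht Hs); assert (HM := grad_abs_sum_pos); assert (T' := Rabs_pos (t - s)).
  nra.
Qed.

Lemma graph_slope_derive s0 : Rabs s0 < eta -> is_derive phi s0 (graph_slope s0).
Proof.
  intros Hs0; assert (HM := grad_abs_sum_pos); destruct (graph_in_box s0 Hs0) as [Bx By].
  set (al := gy (P1 s0) (P2 s0) * nu1 - gx (P1 s0) (P2 s0) * nu2).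
  set (be := gx (P1 s0) (P2 s0) * nu1 + gy (P1 s0) (P2 s0) * nu2).
  assert (Hbe : 0 < be) by (assert (T := grad_transversal _ _ Bx By); fold be in T; lra).
  change (graph_slope s0) with (- al / be).
  apply is_derive_Reals; intros e He.
  destruct (G_strict _ _ Bx By (e * be / (4 * M))) as [d1 [Hd1 HS]];
    [apply Rdiv_lt_0_compat; nra|].
  assert (Hm1 := Rmin_l (eta - Rabs s0) (d1 / (2 * M))).
  assert (Hm2 := Rmin_r (eta - Rabs s0) (d1 / (2 * M))).
  assert (Hdl : 0 < Rmin (eta - Rabs s0) (d1 / (2 * M)))
    by (apply Rmin_glb_lt; [lra | apply Rdiv_lt_0_compat; lra]).
  exists (mkposreal _ Hdl); intros h Hh0 Hh; simpl in Hh.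
  assert (Ht : Rabs (s0 + h) < eta) by (eapply Rle_lt_trans; [apply Rabs_triang | lra]).
  assert (Step := graph_step s0 (s0 + h) Hs0 Ht); replace (s0 + h - s0) with h in Step by ring.
  assert (Hclose : 2 * M * Rabs h < d1).
  { apply Rlt_le_trans with (2 * M * (d1 / (2 * M))); [apply Rmult_lt_compat_l; lra|].
    right; field; lra. }
  assert (T1 := Rabs_pos (P1 (s0 + h) - P1 s0)); assert (T2 := Rabs_pos (P2 (s0 + h) - P2 s0)).
  assert (T := HS (P1 (s0 + h)) (P2 (s0 + h)) (P1 s0) (P2 s0) ltac:(lra) ltac:(lra)
    ltac:(rewrite Rminus_diag, Rabs_R0; lra) ltac:(rewrite Rminus_diag, Rabs_R0; lra)).
  assert (Gt : G (P1 (s0 + h)) (P2 (s0 + h)) = 0) by exact (proj2 (phi_graph _ Ht)).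
  assert (G0 : G (P1 s0) (P2 s0) = 0) by exact (proj2 (phi_graph _ Hs0)).
  rewrite Gt, G0 in T.
  set (dp := phi (s0 + h) - phi s0).
  replace (0 - 0 - (gx (P1 s0) (P2 s0) * (P1 (s0 + h) - P1 s0)
      + gy (P1 s0) (P2 s0) * (P2 (s0 + h) - P2 s0))) with (- (h * al + dp * be)) in T
    by (unfold al, be, dp, P1, P2, X, Y, frame1, frame2; ring).
  rewrite Rabs_Ropp in T.
  replace (dp / h - - al / be) with ((h * al + dp * be) / (h * be)) by (field; lra).
  assert (Pha : 0 < Rabs h) by (apply Rabs_pos_lt; auto).
  rewrite Rabs_div, Rabs_mult, (Rabs_right be) by nra.
  apply Rmult_lt_reg_r with (Rabs h * be); [nra|].
  unfold Rdiv; rewrite Rmult_assoc, Rinv_l, Rmult_1_r by nra.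
  eapply Rle_lt_trans; [exact T|].
  apply Rle_lt_trans with (e * be / (4 * M) * (2 * M * Rabs h));
    [apply Rmult_le_compat_l; [apply Rlt_le, Rdiv_lt_0_compat|]; nra|].
  replace (e * be / (4 * M) * (2 * M * Rabs h)) with (e * (Rabs h * be) / 2) by (field; lra).
  assert (0 < e * (Rabs h * be)) by (apply Rmult_lt_0_compat; [|apply Rmult_lt_0_compat]; lra).
  lra.
Qed.

Lemma graph_comp_continuous (F : R -> R -> R) s0 : Rabs s0 < eta -> cont2 F (P1 s0) (P2 s0) ->
  continuity_pt (fun s => F (P1 s) (P2 s)) s0.
Proof.
  intros Hs0 HF; apply continuity_pt_epsilon; intros e He; assert (HM := grad_abs_sum_pos).
  destruct (cont2_box _ _ _ HF e He) as [d [Hd HFd]].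
  assert (Hm1 := Rmin_l (eta - Rabs s0) (d / (2 * M))); assert (Hm2 := Rmin_r (eta - Rabs s0) (d / (2 * M))).
  exists (Rmin (eta - Rabs s0) (d / (2 * M))); split; [apply Rmin_glb_lt; [lra | apply Rdiv_lt_0_compat; lra]|].
  intros t Ht.
  assert (Hte : Rabs t < eta).
  { replace t with (s0 + (t - s0)) by ring; eapply Rle_lt_trans; [apply Rabs_triang | lra]. }
  assert (Step := graph_step s0 t Hs0 Hte).
  assert (2 * M * Rabs (t - s0) < d).
  { apply Rlt_le_trans with (2 * M * (d / (2 * M))); [apply Rmult_lt_compat_l; lra|].
    right; field; lra. }
  assert (T1 := Rabs_pos (P1 t - P1 s0)); assert (T2 := Rabs_pos (P2 t - P2 s0)).
  apply HFd; lra.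
Qed.

Lemma graph_slope_continuous s0 : Rabs s0 < eta -> continuity_pt graph_slope s0.
Proof.
  intros Hs0; destruct (graph_in_box s0 Hs0) as [Bx By].
  destruct (grad_cont _ _ Bx By) as [Cx Cy].
  assert (Kx := graph_comp_continuous gx s0 Hs0 Cx); assert (Ky := graph_comp_continuous gy s0 Hs0 Cy).
  assert (Hbe := grad_transversal _ _ Bx By).
  set (kx := fun s => gx (P1 s) (P2 s)) in *; set (ky := fun s => gy (P1 s) (P2 s)) in *.
  assert (Cn : forall c, continuity_pt (fun _ => c) s0) by (intros c; apply continuity_pt_const; intros u v; reflexivity).
  change (continuity_pt (fun s => - (ky s * nu1 - kx s * nu2) / (kx s * nu1 + ky s * nu2)) s0).
  apply (continuity_pt_div (fun s => - (ky s * nu1 - kx s * nu2)) (fun s => kx s * nu1 + ky s * nu2)).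
  - apply (continuity_pt_opp (fun s => ky s * nu1 - kx s * nu2)).
    apply (continuity_pt_minus (fun s => ky s * nu1) (fun s => kx s * nu2));
      [apply (continuity_pt_mult ky (fun _ => nu1)) | apply (continuity_pt_mult kx (fun _ => nu2))]; auto.
  - apply (continuity_pt_plus (fun s => kx s * nu1) (fun s => ky s * nu2));
      [apply (continuity_pt_mult kx (fun _ => nu1)) | apply (continuity_pt_mult ky (fun _ => nu2))]; auto.
  - unfold kx, ky; lra.
Qed.

Hypothesis phi_0 : phi 0 = 0.
Hypothesis phi_unique : forall s h, Rabs s < eta -> Rabs h < eta ->
  G (X s h) (Y s h) = 0 -> h = phi s.

(* By [frame_sq], [Nu * rnorm s] is the squared distance from (a, b) to the graph point
   over s. *)
Let rnorm s := s ^ 2 + phi s ^ 2.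

Lemma phi_small s : Rabs s < eta -> Rabs (phi s) <= Rabs s / 3.
Proof.
  intros Hs; assert (T := phi_lipschitz s 0 Hs ltac:(rewrite Rabs_R0; assert (T := Rabs_pos s); lra)).
  rewrite phi_0, !Rminus_0_r in T; exact T.
Qed.

Lemma graph_norm_increasing s t : Rabs s < eta -> Rabs t < eta -> 0 <= s * t ->
  Rabs s < Rabs t -> rnorm s < rnorm t.
Proof.
  intros Hs Ht Hst Hlt.
  assert (Hd : Rabs (t - s) <= Rabs t - Rabs s).
  { destruct (Rle_dec 0 s); destruct (Rle_dec 0 t);
      repeat first [rewrite (Rabs_pos_eq s) in * by lra | rewrite (Rabs_left1 s) in * by lra
                   | rewrite (Rabs_pos_eq t) in * by lra | rewrite (Rabs_left1 t) in * by lra];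
      apply Rabs_le; nra. }
  assert (D := phi_lipschitz t s Ht Hs).
  assert (Sm : Rabs (phi t + phi s) <= (Rabs t + Rabs s) / 3).
  { eapply Rle_trans; [apply Rabs_triang|]; assert (T1 := phi_small s Hs);
    assert (T2 := phi_small t Ht); lra. }
  assert (Prod : Rabs ((phi t - phi s) * (phi t + phi s)) <= (Rabs t - Rabs s) / 3 * ((Rabs t + Rabs s) / 3)).
  { rewrite Rabs_mult; apply Rmult_le_compat; try apply Rabs_pos; lra. }
  apply Rabs_le_between in Prod.
  assert (0 < (Rabs t - Rabs s) * (Rabs t + Rabs s)) by (apply Rmult_lt_0_compat; assert (T := Rabs_pos s); lra).
  unfold rnorm; rewrite <- (pow2_abs s), <- (pow2_abs t).
  replace (phi t ^ 2) with (phi s ^ 2 + (phi t - phi s) * (phi t + phi s)) by ring.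
  nra.
Qed.

Lemma graph_norm_continuous s : Rabs s < eta -> continuity_pt rnorm s.
Proof.
  intros Hs; apply continuity_pt_filterlim, (ex_derive_continuous rnorm).
  unfold rnorm; auto_derive; repeat split; exists (graph_slope s); apply graph_slope_derive, Hs.
Qed.

Lemma graph_norm_crossing c : 0 < c < (eta / 2) ^ 2 ->
  exists e1 e2, 0 < e1 < eta /\ 0 < e2 < eta /\ rnorm (- e1) = c /\ rnorm e2 = c.
Proof.
  intros Hc.
  assert (Hr0 : rnorm 0 = 0) by (unfold rnorm; rewrite phi_0; ring).
  assert (Hlow : forall s, s ^ 2 <= rnorm s) by (intros; unfold rnorm; assert (T := pow2_ge_0 (phi s)); lra).
  assert (Hcont : forall s, - (eta / 2) <= s <= eta / 2 -> continuity_pt rnorm s)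
    by (intros s Hs; apply graph_norm_continuous, Rabs_def1; lra).
  destruct (Ranalysis5.IVT_interv (fun s => rnorm s - c) 0 (eta / 2)) as [e2 [He2 Re2]];
    [intros s Hs; apply (continuity_pt_minus rnorm (fun _ => c)); [apply Hcont; lra|];
     apply continuity_pt_const; intros u v; reflexivity
    | lra | rewrite Hr0; lra | assert (T := Hlow (eta / 2)); lra |].
  destruct (Ranalysis5.IVT_interv (fun s => c - rnorm s) (- (eta / 2)) 0) as [z1 [Hz1 Rz1]];
    [intros s Hs; apply (continuity_pt_minus (fun _ => c) rnorm);
     [apply continuity_pt_const; intros u v; reflexivity | apply Hcont; lra]
    | lra | assert (T := Hlow (- (eta / 2))); replace ((- (eta / 2)) ^ 2) with ((eta / 2) ^ 2) in T by ring; lra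
    | rewrite Hr0; lra |].
  exists (- z1), e2; rewrite Ropp_involutive.
  assert (z1 <> 0) by (intros ->; rewrite Hr0 in Rz1; lra).
  assert (e2 <> 0) by (intros ->; rewrite Hr0 in Re2; lra).
  repeat split; lra.
Qed.

Lemma graph_sublevel_interval c : 0 < c < (eta / 2) ^ 2 ->
  exists e1 e2, 0 < e1 < eta /\ 0 < e2 < eta /\
    forall s, Rabs s < eta -> (rnorm s < c <-> - e1 < s < e2).
Proof.
  intros Hc; destruct (graph_norm_crossing c Hc) as [e1 [e2 [He1 [He2 [R1 R2]]]]].
  exists e1, e2; split; [exact He1|]; split; [exact He2|]; intros s Hs.
  assert (A1 : Rabs (- e1) < eta) by (rewrite Rabs_Ropp, Rabs_pos_eq; lra).
  assert (A2 : Rabs e2 < eta) by (rewrite Rabs_pos_eq; lra).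
  split.
  - intros Hrs; split; apply Rnot_le_lt; intros Hle.
    + destruct (Req_dec s (- e1)) as [->|Hne]; [lra|].
      assert (T := graph_norm_increasing (- e1) s A1 Hs ltac:(nra)
        ltac:(rewrite Rabs_Ropp, (Rabs_pos_eq e1), (Rabs_left s); lra)); lra.
    + destruct (Req_dec s e2) as [->|Hne]; [lra|].
      assert (T := graph_norm_increasing e2 s A2 Hs ltac:(nra)
        ltac:(rewrite Rabs_pos_eq, (Rabs_pos_eq s); lra)); lra.
  - intros Hin; destruct (Rlt_le_dec s 0).
    + rewrite <- R1; apply graph_norm_increasing; auto; [nra|].
      rewrite Rabs_Ropp, (Rabs_pos_eq e1), (Rabs_left s); lra.
    + destruct (Req_dec s 0) as [->|Hne].
      * unfold rnorm; rewrite phi_0; lra.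
      * rewrite <- R2; apply graph_norm_increasing; auto; [nra|].
        rewrite (Rabs_pos_eq e2), (Rabs_pos_eq s); lra.
Qed.

Section Reparametrization.

Variables e1 e2 : R.
Hypothesis e1_range : 0 < e1 < eta.
Hypothesis e2_range : 0 < e2 < eta.

Let m := moebius e1 e2.
Let m' := moebius_deriv e1 e2.
Let D1 t := - m' t * nu2 + m' t * graph_slope (m t) * nu1.
Let D2 t := m' t * nu1 + m' t * graph_slope (m t) * nu2.

Lemma moebius_in_graph t : -1 < t < 1 -> Rabs (m t) < eta.
Proof.
  intros Ht; destruct (moebius_range e1 e2 (proj1 e1_range) (proj1 e2_range) t Ht).
  unfold m; apply Rabs_def1; lra.
Qed.

Lemma reparam_derive t : -1 < t < 1 ->
  is_derive (fun t => P1 (m t)) t (D1 t) /\ is_derive (fun t => P2 (m t)) t (D2 t).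
Proof.
  intros Ht.
  assert (Hm := moebius_derive e1 e2 (proj1 e1_range) (proj1 e2_range) t Ht).
  assert (Hk : is_derive (fun t => phi (m t)) t (m' t * graph_slope (m t)))
    by (apply (is_derive_comp phi m); [apply graph_slope_derive, moebius_in_graph | ]; auto).
  split; [apply (is_derive_frame1 a nu1 nu2 m) | apply (is_derive_frame2 b nu1 nu2 m)]; auto.
Qed.

Lemma reparam_deriv_continuous t : -1 < t < 1 -> continuity_pt D1 t /\ continuity_pt D2 t.
Proof.
  intros Ht.
  assert (Cm := moebius_deriv_continuous e1 e2 (proj1 e1_range) (proj1 e2_range) t Ht).
  assert (Cs : continuity_pt (fun t => graph_slope (m t)) t).
  { apply (continuity_pt_comp m graph_slope);
      [apply moebius_continuous | apply graph_slope_continuous, moebius_in_graph]; tauto. }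
  assert (Cn : forall c, continuity_pt (fun _ => c) t)
    by (intros c; apply continuity_pt_const; intros u v; reflexivity).
  assert (Cp : continuity_pt (fun t => m' t * graph_slope (m t)) t)
    by (apply (continuity_pt_mult m' (fun t => graph_slope (m t))); auto).
  split; unfold D1, D2.
  - apply (continuity_pt_plus (fun t => - m' t * nu2) (fun t => m' t * graph_slope (m t) * nu1));
      [apply (continuity_pt_mult (fun t => - m' t) (fun _ => nu2)); [apply (continuity_pt_opp m')|]
      | apply (continuity_pt_mult (fun t => m' t * graph_slope (m t)) (fun _ => nu1))]; auto.
  - apply (continuity_pt_plus (fun t => m' t * nu1) (fun t => m' t * graph_slope (m t) * nu2));
      [apply (continuity_pt_mult m' (fun _ => nu1)) 
      | apply (continuity_pt_mult (fun t => m' t * graph_slope (m t)) (fun _ => nu2))]; auto.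
Qed.

Lemma reparam_C1_curve : C1_curve_through (fun t => P1 (m t)) (fun t => P2 (m t)) 1 a b.
Proof.
  assert (Hloc : forall t, -1 < t < 1 -> locally t (fun y => -1 < y < 1)).
  { intros t Ht; assert (Hr : 0 < Rmin (1 - t) (1 + t)) by (apply Rmin_glb_lt; lra).
    exists (mkposreal _ Hr).
    intros y Hy; assert (T1 := Rmin_l (1 - t) (1 + t)); assert (T2 := Rmin_r (1 - t) (1 + t)).
    change (Rabs (y - t) < Rmin (1 - t) (1 + t)) in Hy; apply Rabs_def2 in Hy; lra. }
  assert (HDer : forall (g D : R -> R), (forall t, -1 < t < 1 -> is_derive g t (D t)) ->
     (forall t, -1 < t < 1 -> continuity_pt D t) -> forall t, -1 < t < 1 -> continuous (Derive g) t).
  { intros g D HD HC t Ht; apply (continuous_ext_loc _ D).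
    - apply (filter_imp _ _ (fun y Hy => eq_sym (is_derive_unique _ _ _ (HD y Hy))) (Hloc t Ht)).
    - apply continuity_pt_filterlim, HC, Ht. }
  assert (Hpos : forall t, -1 < t < 1 -> 0 < m' t)
    by (intros t Ht; apply moebius_deriv_pos; tauto).
  split; [lra|]; split; [|split].
  - intros t Ht; assert (Ht' : -1 < t < 1) by lra.
    destruct (reparam_derive t Ht') as [H1 H2].
    split; [eexists; exact H1|]; split; [eexists; exact H2|].
    split; [apply (HDer _ D1); [intros y Hy; apply (reparam_derive y Hy)
      | intros y Hy; apply (reparam_deriv_continuous y Hy) | exact Ht']|].
    split; [apply (HDer _ D2); [intros y Hy; apply (reparam_derive y Hy)
      | intros y Hy; apply (reparam_deriv_continuous y Hy) | exact Ht']|].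
    replace (Derive (fun t => P1 (m t)) t) with (D1 t) by (symmetry; apply is_derive_unique, H1).
    replace (Derive (fun t => P2 (m t)) t) with (D2 t) by (symmetry; apply is_derive_unique, H2).
    assert (Comb : - nu2 * D1 t + nu1 * D2 t = m' t * Nu) by (unfold D1, D2, Nu; ring).
    assert (T := Hpos t Ht'); destruct (Req_dec (D1 t) 0) as [Z|Z]; [right|left; exact Z].
    intros Z2; rewrite Z, Z2 in Comb; nra.
  - intros s t Hs Ht E1 E2; apply (moebius_inj e1 e2); try tauto; try lra.
    assert (Comb : - nu2 * (P1 (m s) - P1 (m t)) + nu1 * (P2 (m s) - P2 (m t)) = Nu * (m s - m t))
      by (unfold P1, P2, X, Y, frame1, frame2, Nu; ring).
    rewrite E1, E2, !Rminus_diag in Comb; fold m; nra.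
  - unfold P1, P2, X, Y, frame1, frame2, m; rewrite moebius0, phi_0 by tauto; split; ring.
Qed.

End Reparametrization.

Lemma implicit_curve dmax : 0 < dmax -> exists d, 0 < d <= dmax /\
  exists g1 g2 e, C1_curve_through g1 g2 e a b /\
    (forall t, -e < t < e -> dist2 (g1 t) (g2 t) a b < d) /\
    (forall x y, dist2 x y a b < d ->
       (G x y = 0 <-> exists t, -e < t < e /\ g1 t = x /\ g2 t = y)).
Proof.
  intros Hdmax; assert (HM := grad_abs_sum_pos); assert (HsN : 0 < sqrt Nu) by (apply sqrt_lt_R0, grad_nz).
  set (d := Rmin dmax (Rmin (sqrt Nu * eta / 4) (Nu * eta / (2 * M)))).
  assert (Hd1 := Rmin_l dmax (Rmin (sqrt Nu * eta / 4) (Nu * eta / (2 * M)))).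
  assert (Hd2 := Rmin_r dmax (Rmin (sqrt Nu * eta / 4) (Nu * eta / (2 * M)))).
  assert (Hd3 := Rmin_l (sqrt Nu * eta / 4) (Nu * eta / (2 * M))).
  assert (Hd4 := Rmin_r (sqrt Nu * eta / 4) (Nu * eta / (2 * M))); fold d in Hd1, Hd2.
  assert (Hd : 0 < d) by (repeat apply Rmin_glb_lt; try apply Rdiv_lt_0_compat; nra).
  assert (Hc : 0 < d ^ 2 / Nu < (eta / 2) ^ 2).
  { split; [apply Rdiv_lt_0_compat; [apply pow_lt|]; lra|].
    apply Rle_lt_trans with ((sqrt Nu * eta / 4) ^ 2 / Nu).
    - apply Rmult_le_compat_r; [apply Rlt_le, Rinv_0_lt_compat; lra | apply pow_incr; lra].
    - replace ((sqrt Nu * eta / 4) ^ 2 / Nu) with (eta ^ 2 / 16)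
        by (rewrite <- (sqrt_sqrt Nu) at 2 by lra; field; lra).
      nra. }
  destruct (graph_sublevel_interval _ Hc) as [e1 [e2 [He1 [He2 Hint]]]].
  assert (Hball : forall s, Rabs s < eta -> (dist2 (P1 s) (P2 s) a b < d <-> rnorm s < d ^ 2 / Nu)).
  { intros s Hs; rewrite dist2_lt_iff by exact Hd; unfold P1, P2, X, Y; rewrite frame_sq; fold Nu; unfold rnorm.
    split; intros H; [apply Rmult_lt_reg_l with Nu; [lra|]; replace (Nu * (d ^ 2 / Nu)) with (d ^ 2) by (field; lra)
                     | replace (d ^ 2) with (Nu * (d ^ 2 / Nu)) by (field; lra); apply Rmult_lt_compat_l]; lra. }
  set (m := moebius e1 e2).
  assert (Hm : forall t, -1 < t < 1 -> Rabs (m t) < eta /\ - e1 < m t < e2)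
    by (intros t Ht; split; [apply (moebius_in_graph e1 e2)|apply moebius_range]; tauto).
  exists d; split; [lra|]; exists (fun t => P1 (m t)), (fun t => P2 (m t)), 1.
  split; [apply reparam_C1_curve; tauto|]; split.
  - intros t Ht; destruct (Hm t ltac:(lra)) as [A B]; apply Hball, Hint; auto.
  - intros x y Hxy; destruct (frame_coords x y) as [s [h [Ex [Ey [Hs Hh]]]]].
    assert (Hsmall : M * dist2 x y a b / Nu < eta / 2).
    { apply Rlt_le_trans with (M * d / Nu); [apply Rmult_lt_compat_r; [apply Rinv_0_lt_compat|]; nra|].
      apply Rle_trans with (M * (Nu * eta / (2 * M)) / Nu); [|right; field; lra].
      apply Rmult_le_compat_r; [apply Rlt_le, Rinv_0_lt_compat; lra | apply Rmult_le_compat_l; lra]. }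
    split.
    + intros HG; rewrite <- Ex, <- Ey in HG, Hxy.
      assert (Eh := phi_unique s h ltac:(lra) ltac:(lra) HG); subst h.
      destruct (moebius_surj e1 e2 (proj1 He1) (proj1 He2) s) as [t [Ht Hts]];
        [apply Hint; [lra | apply Hball; [lra | exact Hxy]]|].
      exists t; split; [lra|]; fold m in Hts; rewrite Hts; auto.
    + intros [t [Ht [<- <-]]]; apply phi_graph, Hm; lra.
Qed.

End Graph.

End ImplicitCurve.

Lemma grad_transversal_near gx gy a b : cont2 gx a b -> cont2 gy a b ->
  0 < gx a b ^ 2 + gy a b ^ 2 -> exists rho, 0 < rho /\
    forall x y, Rabs (x - a) < rho -> Rabs (y - b) < rho ->
      (gx a b ^ 2 + gy a b ^ 2) / 2 <= gx x y * gx a b + gy x y * gy a b.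
Proof.
  intros Cx Cy HNu; assert (HM := sum_abs_pos _ _ HNu).
  set (c := (gx a b ^ 2 + gy a b ^ 2) / (2 * (Rabs (gx a b) + Rabs (gy a b)))).
  assert (Hc : 0 < c) by (apply Rdiv_lt_0_compat; lra).
  destruct (cont2_box _ _ _ Cx c Hc) as [d1 [Hd1 H1]]; destruct (cont2_box _ _ _ Cy c Hc) as [d2 [Hd2 H2]].
  assert (M1 := Rmin_l d1 d2); assert (M2 := Rmin_r d1 d2).
  exists (Rmin d1 d2); split; [apply Rmin_glb_lt; lra|]; intros x y Hx Hy.
  assert (T := Rabs_lin2_le (gx a b) (gy a b) (gx x y - gx a b) (gy x y - gy a b) c
    ltac:(left; apply H1; lra) ltac:(left; apply H2; lra)).
  replace ((Rabs (gx a b) + Rabs (gy a b)) * c) with ((gx a b ^ 2 + gy a b ^ 2) / 2) in T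
    by (unfold c; field; lra).
  apply Rabs_le_between in T; lra.
Qed.

Lemma zero_set_C1_curve G gx gy a b r0 : 0 < r0 -> G a b = 0 ->
  0 < gx a b ^ 2 + gy a b ^ 2 ->
  (forall x y, Rabs (x - a) < r0 -> Rabs (y - b) < r0 ->
     is_strict_derive2 G x y (gx x y) (gy x y) /\ cont2 gx x y /\ cont2 gy x y) ->
  forall dmax, 0 < dmax -> exists d, 0 < d <= dmax /\
    exists g1 g2 e, C1_curve_through g1 g2 e a b /\
      (forall t, -e < t < e -> dist2 (g1 t) (g2 t) a b < d) /\
      (forall x y, dist2 x y a b < d ->
         (G x y = 0 <-> exists t, -e < t < e /\ g1 t = x /\ g2 t = y)).
Proof.
  intros Hr0 G0 HNu HG dmax Hdmax.
  assert (Z : Rabs (a - a) < r0 /\ Rabs (b - b) < r0) by (rewrite !Rminus_diag, Rabs_R0; lra).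
  destruct (HG a b (proj1 Z) (proj2 Z)) as [_ [Cx Cy]].
  destruct (grad_transversal_near gx gy a b Cx Cy HNu) as [r1 [Hr1 Htr]].
  assert (M1 := Rmin_l r0 r1); assert (M2 := Rmin_r r0 r1).
  assert (Hbox : forall x y, Rabs (x - a) < Rmin r0 r1 -> Rabs (y - b) < Rmin r0 r1 ->
    (is_strict_derive2 G x y (gx x y) (gy x y) /\ cont2 gx x y /\ cont2 gy x y) /\
    (gx a b ^ 2 + gy a b ^ 2) / 2 <= gx x y * gx a b + gy x y * gy a b)
    by (intros x y Hx Hy; split; [apply HG | apply Htr]; lra).
  destruct (implicit_graph G gx gy a b (Rmin r0 r1)) as [eta [phi [Heta [H0 [Hfr [Hg [Hu HL]]]]]]];
    [apply Rmin_glb_lt; lra | exact G0 | exact HNu | apply Hbox|].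
  apply (implicit_curve G gx gy a b (Rmin r0 r1) HNu) with eta phi; auto;
    intros x y Hx Hy; apply Hbox; auto.
Qed.

(** * The singular set *)

(* [m21 - m12 = 2] makes the matrix nonzero, so a vanishing determinant means rank one. *)
Lemma rank_one_row_relation m11 m12 m21 m22 : m21 - m12 = 2 -> m11 * m22 - m12 * m21 = 0 ->
  exists n1 n2, 0 < n1 ^ 2 + n2 ^ 2 /\
    - n2 * m11 + n1 * m21 = 0 /\ - n2 * m12 + n1 * m22 = 0 /\
    0 < (n1 * m11 + n2 * m21) ^ 2 + (n1 * m12 + n2 * m22) ^ 2.
Proof.
  intros Hs Hd.
  destruct (Rlt_le_dec 0 (m11 ^ 2 + m21 ^ 2)) as [Hp|Hp].
  - exists m11, m21; split; [exact Hp|]; split; [ring|]; split; [nra|].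
    assert (0 < (m11 * m11 + m21 * m21) ^ 2) by (apply pow_lt; simpl in Hp; lra).
    assert (0 <= (m11 * m12 + m21 * m22) ^ 2) by apply pow2_ge_0; lra.
  - assert (m11 = 0) by nra; assert (m21 = 0) by nra; subst m11 m21.
    exists m12, m22; assert (E : m12 = -2) by lra; subst m12.
    split; [apply sum_sq_pos; lra|]; split; [ring|]; split; [ring|].
    apply Rlt_le_trans with ((-2 * -2 + m22 * m22) ^ 2);
      [apply pow_lt; nra | assert (0 <= (-2 * 0 + m22 * 0) ^ 2) by apply pow2_ge_0; lra].
Qed.

(* A binary quadratic form vanishing at the three directions k = 0, 1, -1 of the family
   [k n + n^perp] is zero, which the hypotheses on the matrix exclude. *)
Lemma curv_form_nonzero_direction m11 m12 m21 m22 n1 n2 :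
  m21 - m12 = 2 -> m11 * m22 - m12 * m21 = 0 -> 0 < n1 ^ 2 + n2 ^ 2 ->
  exists k0, curv_form m11 m22 (m12 + m21) (k0 * n1 - n2) (k0 * n2 + n1) <> 0.
Proof.
  intros Hs Hd HN.
  destruct (Req_dec (curv_form m11 m22 (m12 + m21) (0 * n1 - n2) (0 * n2 + n1)) 0) as [Q0|Q0];
    [|exists 0; exact Q0].
  destruct (Req_dec (curv_form m11 m22 (m12 + m21) (1 * n1 - n2) (1 * n2 + n1)) 0) as [Qp|Qp];
    [|exists 1; exact Qp].
  destruct (Req_dec (curv_form m11 m22 (m12 + m21) (-1 * n1 - n2) (-1 * n2 + n1)) 0) as [Qm|Qm];
    [|exists (-1); exact Qm].
  exfalso; unfold curv_form in Q0, Qp, Qm.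
  set (c3 := m12 + m21) in *.
  set (al := m11 * n2 ^ 2 + m22 * n1 ^ 2 - n1 * n2 * c3).
  set (be := 2 * m11 * n1 * n2 - 2 * m22 * n1 * n2 - c3 * (n1 ^ 2 - n2 ^ 2)).
  set (ga := m11 * n1 ^ 2 + m22 * n2 ^ 2 + n1 * n2 * c3).
  assert (Ea : al = 0) by (unfold al; lra).
  assert (Eg : ga = 0) by (unfold ga; lra).
  assert (Eb : be = 0) by (unfold be; lra).
  assert (E3 : c3 * (n1 ^ 2 + n2 ^ 2) ^ 2 = 2 * (n1 * n2) * (ga - al) - (n1 ^ 2 - n2 ^ 2) * be)
    by (unfold al, be, ga; ring).
  assert (Eu : (m11 - m22) * (n1 ^ 2 + n2 ^ 2) ^ 2
      = (n1 ^ 2 - n2 ^ 2) * (ga - al) + 2 * (n1 * n2) * be) by (unfold al, be, ga; ring).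
  assert (Es : (m11 + m22) * (n1 ^ 2 + n2 ^ 2) = al + ga) by (unfold al, ga; ring).
  rewrite Ea, Eb, Eg in E3, Eu; rewrite Ea, Eg in Es.
  assert (HN2 : 0 < (n1 ^ 2 + n2 ^ 2) ^ 2) by (apply pow_lt; lra).
  assert (Z3 : c3 = 0) by (apply Rmult_eq_reg_r with ((n1 ^ 2 + n2 ^ 2) ^ 2); lra).
  assert (Zu : m11 - m22 = 0) by (apply Rmult_eq_reg_r with ((n1 ^ 2 + n2 ^ 2) ^ 2); lra).
  assert (Zs : m11 + m22 = 0) by (apply Rmult_eq_reg_r with (n1 ^ 2 + n2 ^ 2); lra).
  unfold c3 in Z3.
  assert (m11 = 0) by lra; assert (m22 = 0) by lra; assert (m21 = 1) by lra; assert (m12 = -1) by lra.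
  subst; lra.
Qed.

Lemma comb_zero_iff n1 n2 f1 f2 : 0 < n1 ^ 2 + n2 ^ 2 ->
  (n1 * f1 + n2 * f2 = 0 /\ - n2 * f1 + n1 * f2 = 0 <-> f1 = 0 /\ f2 = 0).
Proof.
  intros HN; split; [intros [E1 E2] | intros [-> ->]; split; ring].
  split; apply (Rmult_eq_reg_l (n1 ^ 2 + n2 ^ 2)); try lra.
  - replace ((n1 ^ 2 + n2 ^ 2) * f1) with (n1 * (n1 * f1 + n2 * f2) - n2 * (- n2 * f1 + n1 * f2))
      by ring; rewrite E1, E2; ring.
  - replace ((n1 ^ 2 + n2 ^ 2) * f2) with (n2 * (n1 * f1 + n2 * f2) + n1 * (- n2 * f1 + n1 * f2))
      by ring; rewrite E1, E2; ring.
Qed.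

Section SingularSet.

Variables (Om : R -> R -> Prop) (u : R -> R -> R).
Hypothesis Om_open : open2 Om.
Hypothesis u_C2 : C2_on Om u.

Lemma is_strict_derive2_N_comb al be x y : Om x y ->
  is_strict_derive2 (fun x y => al * N1num u x y + be * N2num u x y) x y
    (al * dx (dx u) x y + be * (dx (dy u) x y + 1)) (al * (dy (dx u) x y - 1) + be * dy (dy u) x y).
Proof.
  intros Oxy; apply is_strict_derive2_lin2;
    [apply (is_strict_derive2_N1num Om) | apply (is_strict_derive2_N2num Om)]; assumption.
Qed.

Variables x0 y0 : R.
Hypothesis p0_singular : singular Om u x0 y0.

Let m11 := dx (dx u) x0 y0.
Let m12 := dy (dx u) x0 y0 - 1.
Let m21 := dx (dy u) x0 y0 + 1.
Let m22 := dy (dy u) x0 y0.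

Lemma singular_isolated_of_det : m11 * m22 - m12 * m21 <> 0 -> isolated_in (singular Om u) x0 y0.
Proof.
  intros Hdet; destruct p0_singular as [O0 [Z1 Z2]].
  destruct (is_strict_derive2_zero_isolated (N1num u) (N2num u) x0 y0 m11 m12 m21 m22)
    as [d [Hd Hiso]]; auto; try (apply (is_strict_derive2_N1num Om) || apply (is_strict_derive2_N2num Om)); auto.
  exists d; split; [exact Hd|]; intros x y Hxy [_ [E1 E2]].
  assert (T1 := Rabs_le_dist2_l x y x0 y0); assert (T2 := Rabs_le_dist2_r x y x0 y0).
  apply Hiso; auto; lra.
Qed.

Variables C dH : R.
Hypothesis C_pos : 0 < C.
Hypothesis dH_pos : 0 < dH.
Hypothesis ball_in_Om : forall x y, dist2 x y x0 y0 < dH -> Om x y.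
Hypothesis Hcurv_bound : forall x y, dist2 x y x0 y0 < dH -> ~ singular Om u x y ->
  Rabs (Hcurv u x y) <= C / dist2 x y x0 y0.

(* With n the row relation of the rank-one Jacobian, S(u) is locally the zero set of the
   combination n1 (u_x - y) + n2 (u_y + x), whose gradient does not vanish. *)
Lemma singular_comb_zero_set : m11 * m22 - m12 * m21 = 0 ->
  exists n1 n2 del, 0 < n1 ^ 2 + n2 ^ 2 /\
    0 < (n1 * m11 + n2 * m21) ^ 2 + (n1 * m12 + n2 * m22) ^ 2 /\ 0 < del /\
    forall x y, Rabs (x - x0) < del -> Rabs (y - y0) < del ->
      n1 * N1num u x y + n2 * N2num u x y = 0 -> - n2 * N1num u x y + n1 * N2num u x y = 0.
Proof.
  intros Hdet; destruct p0_singular as [O0 [Z1 Z2]].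
  assert (Hsym : m21 - m12 = 2) by (unfold m21, m12; rewrite (dx_dy_comm Om u x0 y0); auto; ring).
  destruct (rank_one_row_relation m11 m12 m21 m22 Hsym Hdet) as [n1 [n2 [HN [Hw1 [Hw2 HNu]]]]].
  destruct (curv_form_nonzero_direction m11 m12 m21 m22 n1 n2 Hsym Hdet HN) as [k0 HQ].
  destruct u_C2 as [_ [Hdx Hdy]].
  destruct (Hdx x0 y0 O0) as [_ [_ [_ [Cxx Cxy]]]]; destruct (Hdy x0 y0 O0) as [_ [_ [_ [Cyx Cyy]]]].
  assert (Hctrl := curv_bound_direction_controls_dist (N1num u) (N2num u) (dx (dx u)) (dy (dy u))
    (fun x y => dy (dx u) x y + dx (dy u) x y) x0 y0 (k0 * n1 - n2) (k0 * n2 + n1) C dH).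
  destruct (flat_combination_zero_set (fun x y => n1 * N1num u x y + n2 * N2num u x y)
    (fun x y => - n2 * N1num u x y + n1 * N2num u x y) x0 y0
    (n1 * m11 + n2 * m21) (n1 * m12 + n2 * m22) k0) as [del [Hdel HGW]].
  - apply is_strict_derive2_N_comb, O0.
  - exact HNu.
  - assert (SW := is_strict_derive2_N_comb (- n2) n1 x0 y0 O0).
    change (is_strict_derive2 (fun x y => - n2 * N1num u x y + n1 * N2num u x y) x0 y0
      (- n2 * m11 + n1 * m21) (- n2 * m12 + n1 * m22)) in SW.
    rewrite Hw1, Hw2 in SW; exact SW.
  - unfold N1num, N2num; rewrite Z1, Z2; ring.
  - apply direction_controls_dist_rotate; [exact HN|]; apply Hctrl; auto.
    + replace (dy (dx u) x0 y0 + dx (dy u) x0 y0) with (m12 + m21) by (unfold m12, m21; ring).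
      exact HQ.
    + apply cont2_plus; assumption.
    + intros x y Hxy Hnz; apply (curv_form_dist2_le Om); auto.
      apply Hcurv_bound; auto; intros [_ E]; exact (Hnz E).
  - exists n1, n2, del; auto.
Qed.

Lemma singular_curve_of_det0 : m11 * m22 - m12 * m21 = 0 ->
  exists d, 0 < d /\ (forall x y, dist2 x y x0 y0 < d -> Om x y) /\
    exists (g1 g2 : R -> R) (e : R), C1_curve_through g1 g2 e x0 y0 /\
      (forall t, -e < t < e -> dist2 (g1 t) (g2 t) x0 y0 < d) /\
      forall x y, dist2 x y x0 y0 < d ->
        (singular Om u x y <-> exists t, -e < t < e /\ g1 t = x /\ g2 t = y).
Proof.
  intros Hdet; destruct (singular_comb_zero_set Hdet) as [n1 [n2 [del [HN [HNu [Hdel HGW]]]]]].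
  pose proof p0_singular as [O0 [Z1 Z2]].
  destruct (open2_box Om x0 y0 Om_open O0) as [rO [HrO Hbox]].
  pose proof u_C2 as [_ [Hdx Hdy]].
  destruct (zero_set_C1_curve (fun x y => n1 * N1num u x y + n2 * N2num u x y)
    (fun x y => n1 * dx (dx u) x y + n2 * (dx (dy u) x y + 1))
    (fun x y => n1 * (dy (dx u) x y - 1) + n2 * dy (dy u) x y) x0 y0 rO HrO)
    with (dmax := Rmin del rO) as [d [[Hd Hdm] [g1 [g2 [e [Hcurve [Hrange Hchar]]]]]]].
  - unfold N1num, N2num; rewrite Z1, Z2; ring.
  - exact HNu.
  - intros x y Hx Hy; assert (Oxy := Hbox x y Hx Hy).
    destruct (Hdx x y Oxy) as [_ [_ [_ [Cxx Cxy]]]]; destruct (Hdy x y Oxy) as [_ [_ [_ [Cyx Cyy]]]].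
    split; [apply is_strict_derive2_N_comb, Oxy|].
    split; [apply (cont2_ext (fun x y => n1 * dx (dx u) x y + n2 * dx (dy u) x y + n2))
           | apply (cont2_ext (fun x y => n1 * dy (dx u) x y + n2 * dy (dy u) x y + - n1))];
      try (intros; ring); apply cont2_affine; assumption.
  - apply Rmin_glb_lt; assumption.
  - assert (M1 := Rmin_l del rO); assert (M2 := Rmin_r del rO).
    assert (Hball : forall x y, dist2 x y x0 y0 < d -> Rabs (x - x0) < Rmin del rO /\ Rabs (y - y0) < Rmin del rO)
      by (intros x y Hxy; assert (T1 := Rabs_le_dist2_l x y x0 y0);
          assert (T2 := Rabs_le_dist2_r x y x0 y0); split; lra).
    exists d; split; [exact Hd|]; split; [intros x y Hxy; destruct (Hball x y Hxy); apply Hbox; lra|].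
    exists g1, g2, e; split; [exact Hcurve|]; split; [exact Hrange|].
    intros x y Hxy; rewrite <- (Hchar x y Hxy); destruct (Hball x y Hxy) as [Bx By].
    split; [intros [_ [E1 E2]]; unfold N1num, N2num; rewrite E1, E2; ring|].
    intros HG; assert (HW := HGW x y ltac:(lra) ltac:(lra) HG).
    destruct (proj1 (comb_zero_iff n1 n2 _ _ HN) (conj HG HW)) as [E1 E2].
    split; [apply Hbox; lra | split; assumption].
Qed.

End SingularSet.

Theorem theoremB (Om : R -> R -> Prop) (u : R -> R -> R) (x0 y0 : R) :
  domain2 Om ->
  C2_on Om u ->
  singular Om u x0 y0 ->
  (exists C d, 0 < C /\ 0 < d /\
     (forall x y, dist2 x y x0 y0 < d -> Om x y) /\
     (forall x y, dist2 x y x0 y0 < d -> ~ singular Om u x y ->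
        Rabs (Hcurv u x y) <= C / dist2 x y x0 y0)) ->
  isolated_in (singular Om u) x0 y0 \/
  (exists d, 0 < d /\ (forall x y, dist2 x y x0 y0 < d -> Om x y) /\
     exists (g1 g2 : R -> R) (e : R),
       C1_curve_through g1 g2 e x0 y0 /\
       (forall t, -e < t < e -> dist2 (g1 t) (g2 t) x0 y0 < d) /\
       forall x y, dist2 x y x0 y0 < d ->
         (singular Om u x y <-> exists t, -e < t < e /\ g1 t = x /\ g2 t = y)).
Proof.
  intros [HO _] HC2 Hp0 [C [dH [HC [HdH [Hball Hbound]]]]].
  destruct (Req_dec (dx (dx u) x0 y0 * dy (dy u) x0 y0
                     - (dy (dx u) x0 y0 - 1) * (dx (dy u) x0 y0 + 1)) 0) as [Hdet|Hdet].
  - right; exact (singular_curve_of_det0 Om u HO HC2 x0 y0 Hp0 C dH HC HdH Hball Hbound Hdet).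
  - left; exact (singular_isolated_of_det Om u HO HC2 x0 y0 Hp0 Hdet).
Qed.
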